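(* Let $(q_n),(r_n)$ be complex sequences vanishing faster than any negative power of $|n|$ as $n\to\pm\infty$ with $1-q_nr_n\neq0$ and $1+q_nr_{n+1}\ne0$ for all $n$, and let $\begin{bmatrix}\bar M_{nm}&M_{nm}\end{bmatrix}$ be as in the context. Writing $[\mathbf v]_1,[\mathbf v]_2$ for the components of a column vector $\mathbf v$, $$q_n=\frac{\sum_{l=n}^\infty[M_{nl}]_1\sum_{k=n}^\infty[M_{nk}]_2}{\sum_{l=n}^\infty[\bar M_{nl}]_1\sum_{k=n}^\infty[M_{nk}]_2-\sum_{l=n}^\infty[M_{nl}]_1\sum_{k=n}^\infty[\bar M_{nk}]_2},$$ $$r_n=\frac{\sum_{l=n-1}^\infty[\bar M_{(n-1)l}]_2}{\sum_{l=n-1}^\infty[M_{(n-1)l}]_2}-\frac{\sum_{l=n}^\infty[\bar M_{nl}]_2}{\sum_{l=n}^\infty[M_{nl}]_2}.$$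
   Context: System (Q): $\begin{bmatrix}\alpha_n\\ \beta_n\end{bmatrix}=\begin{bmatrix} z & (z-z^{-1})q_n\\ z r_n & z^{-1}+(z-z^{-1})q_nr_n\end{bmatrix}\begin{bmatrix}\alpha_{n+1}\\ \beta_{n+1}\end{bmatrix}$, $n\in\mathbb Z$. For $|z|=1$ let $\psi_n$, $\bar\psi_n$ (overbar not complex conjugation) be the solutions with $\psi_n=\begin{bmatrix}o(1)\\ z^n[1+o(1)]\end{bmatrix}$ and $\bar\psi_n=\begin{bmatrix}z^{-n}[1+o(1)]\\ o(1)\end{bmatrix}$ as $n\to+\infty$. Let $K_{nm}:=\frac1{2\pi i}\oint\psi_n z^{-m-1}dz$, $\bar K_{nm}:=\frac1{2\pi i}\oint\bar\psi_n z^{m-1}dz$ (integrals counterclockwise over the unit circle; these are column vectors with $\psi_n=\sum_{l\ge n}K_{nl}z^l$, $\bar\psi_n=\sum_{l\ge n}\bar K_{nl}z^{-l}$). The $2\times2$ matrix $\begin{bmatrix}\bar K_{nn}&K_{nn}\end{bmatrix}$ is invertible and $\begin{bmatrix}\bar M_{nm}&M_{nm}\end{bmatrix}:=\begin{bmatrix}\bar K_{nn}&K_{nn}\end{bmatrix}^{-1}\begin{bmatrix}\bar K_{nm}&K_{nm}\end{bmatrix}$ for $m\ge n$. (These $M,\bar M$ are the solution of the discrete Marchenko system of (Q).) *)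

From Stdlib Require Import Reals ZArith.
From Coquelicot Require Import Coquelicot.
Open Scope C_scope.

Definition vec2 := (C * C)%type.
Definition comp1 (v : vec2) : C := fst v.
Definition comp2 (v : vec2) : C := snd v.

Fixpoint cpow (z : C) (k : nat) : C :=
  match k with O => 1 | S k' => z * cpow z k' end.
Definition zpow (z : C) (m : Z) : C :=
  match m with
  | Z0 => 1
  | Zpos p => cpow z (Pos.to_nat p)
  | Zneg p => / cpow z (Pos.to_nat p)
  end.

Definition eit (t : R) : C := (cos t, sin t).
Definition Ci : C := (0%R, 1%R).

(* counterclockwise contour integral over the unit circle, parametrised by
   z = e^{it}, t in [0, 2 pi], dz = i e^{it} dt  (Riemann integral of a C-valued map) *)
Definition circ_int (f : C -> C) : C :=
  RInt (V := C_R_CompleteNormedModule) (fun t => f (eit t) * (Ci * eit t)) 0 (2 * PI).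

Definition rapid_decay (a : Z -> C) : Prop :=
  forall (k : nat) (eps : R), (0 < eps)%R ->
    exists N : Z, forall n : Z, (N <= Z.abs n)%Z ->
      (IZR (Z.abs n) ^ k * Cmod (a n) < eps)%R.

(* system (Q): v_n = T_n(z) v_{n+1} *)
Definition Qstep (q r : Z -> C) (n : Z) (z : C) (w : vec2) : vec2 :=
  ( z * comp1 w + (z - / z) * q n * comp2 w ,
    z * r n * comp1 w + (/ z + (z - / z) * q n * r n) * comp2 w ).

Definition solves_Q (q r : Z -> C) (z : C) (v : Z -> vec2) : Prop :=
  forall n : Z, v n = Qstep q r n z (v (n + 1)%Z).

Definition cv_pinf (a : Z -> C) (l : C) : Prop :=
  forall eps : R, (0 < eps)%R ->
    exists N : Z, forall n : Z, (N <= n)%Z -> (Cmod (a n - l) < eps)%R.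

Definition jost_psi (q r : Z -> C) (psi : Z -> C -> vec2) : Prop :=
  forall z : C, Cmod z = 1%R ->
    solves_Q q r z (fun n => psi n z) /\
    cv_pinf (fun n => comp1 (psi n z)) 0 /\
    cv_pinf (fun n => zpow z (- n) * comp2 (psi n z)) 1.

Definition jost_psibar (q r : Z -> C) (psib : Z -> C -> vec2) : Prop :=
  forall z : C, Cmod z = 1%R ->
    solves_Q q r z (fun n => psib n z) /\
    cv_pinf (fun n => zpow z n * comp1 (psib n z)) 1 /\
    cv_pinf (fun n => comp2 (psib n z)) 0.

Definition twopii : C := 2 * RtoC PI * Ci.
Definition Kc (psi : Z -> C -> vec2) (n m : Z) : vec2 :=
  ( / twopii * circ_int (fun z => comp1 (psi n z) * zpow z (- m - 1)),
    / twopii * circ_int (fun z => comp2 (psi n z) * zpow z (- m - 1)) ).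
Definition Kbc (psib : Z -> C -> vec2) (n m : Z) : vec2 :=
  ( / twopii * circ_int (fun z => comp1 (psib n z) * zpow z (m - 1)),
    / twopii * circ_int (fun z => comp2 (psib n z) * zpow z (m - 1)) ).

(* [Mbar_{nm} M_{nm}] := [Kbar_{nn} K_{nn}]^{-1} [Kbar_{nm} K_{nm}]
   (2x2 inverse written out: A = [a b; c d] with columns a c = Kbar_nn, b d = K_nn) *)
Definition inv2_apply (col1 col2 v : vec2) : vec2 :=
  let a := comp1 col1 in let c := comp2 col1 in
  let b := comp1 col2 in let d := comp2 col2 in
  let det := a * d - b * c in
  ( / det * (d * comp1 v - b * comp2 v), / det * (- c * comp1 v + a * comp2 v) ).

Definition Mbar (psi psib : Z -> C -> vec2) (n m : Z) : vec2 :=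
  inv2_apply (Kbc psib n n) (Kc psi n n) (Kbc psib n m).
Definition Mc (psi psib : Z -> C -> vec2) (n m : Z) : vec2 :=
  inv2_apply (Kbc psib n n) (Kc psi n n) (Kc psi n m).

Definition zsum_from (n : Z) (a : Z -> C) (S : C) : Prop :=
  is_series (K := R_AbsRing) (V := C_R_NormedModule)
    (fun k : nat => a (n + Z.of_nat k)%Z) S.

(* On the unit circle the Jost solutions are limits of trigonometric polynomials.  Running
   (Q) backwards from [(0, z^N)] (resp. [(z^-N, 0)]) acts on Fourier coefficients by maps
   that are Lipschitz in l^1 with constants [(1 + 2|q_n|)(1 + |r_n|)], whose product
   converges by the rapid decay; hence the coefficient sequences converge in l^1, uniformly
   in the starting point, and a Wronskian argument identifies the limits with [psi] and
   [psibar].  So [K_(n,n+k)], [Kbar_(n,n+k)] are the limiting coefficients.  Their [k = 0]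
   entries satisfy [K_nn = (-q_n B, (1 - q_n r_n) B)] and [Kbar_nn = (a, r_n a)], with
   [a, B <> 0] because the hypotheses on [1 - q_n r_n] and [1 + q_n r_(n+1)] propagate
   nonvanishing down from [n = +oo].  Summing coefficients evaluates at [z = 1], where (Q)
   is triangular: [sum_l K_nl = psi_n(1) = (0, 1)] and [sum_l Kbar_nl = psibar_n(1) = (1, D_n)]
   with [D_(n-1) = D_n + r_(n-1)].  Inverting [[Kbar_nn K_nn]] gives both formulas. *)

From Stdlib Require Import Reals ZArith Lra Lia.
From Coquelicot Require Import Coquelicot.
Open Scope C_scope.

(** * Unit circle and Fourier modes *)

Lemma eit_add (a b : R) : eit a * eit b = eit (a + b).
Proof. unfold eit; apply injective_projections; simpl; rewrite ?cos_plus, ?sin_plus; ring. Qed.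

Lemma eit_0 : eit 0 = 1.
Proof. unfold eit; rewrite cos_0, sin_0; reflexivity. Qed.

Lemma Cmod_eit (a : R) : Cmod (eit a) = 1%R.
Proof.
  unfold eit, Cmod; simpl. pose proof (sin2_cos2 a) as H. unfold Rsqr in H.
  replace (cos a * (cos a * 1) + sin a * (sin a * 1))%R with 1%R by lra. apply sqrt_1.
Qed.

Lemma eit_neq0 (a : R) : eit a <> 0.
Proof. intro H. pose proof (Cmod_eit a) as H1. rewrite H, Cmod_0 in H1. lra. Qed.

Lemma eit_opp (a : R) : eit (- a) = / eit a.
Proof.
  pose proof (eit_neq0 a) as Ha.
  rewrite <- (Cmult_1_l (eit (- a))), <- (Cinv_l (eit a) Ha), <- Cmult_assoc, eit_add,
    Rplus_opp_r, eit_0, Cmult_1_r. reflexivity.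
Qed.

Lemma cpow_eit (a : R) (n : nat) : cpow (eit a) n = eit (INR n * a).
Proof.
  induction n as [|n IH]; simpl cpow.
  - rewrite Rmult_0_l, eit_0; reflexivity.
  - rewrite IH, eit_add, S_INR. f_equal; ring.
Qed.

Lemma zpow_eit (a : R) (k : Z) : zpow (eit a) k = eit (IZR k * a).
Proof.
  destruct k as [|p|p]; simpl zpow.
  - rewrite Rmult_0_l, eit_0; reflexivity.
  - rewrite cpow_eit, INR_IZR_INZ, positive_nat_Z. reflexivity.
  - rewrite cpow_eit, <- eit_opp, INR_IZR_INZ, positive_nat_Z, <- Pos2Z.opp_pos, opp_IZR.
    f_equal; ring.
Qed.

Definition fmode (t : R) (a : Z) : C := eit (IZR a * t).

Lemma Cmod_fmode (t : R) (a : Z) : Cmod (fmode t a) = 1%R.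
Proof. apply Cmod_eit. Qed.

Lemma fmode_add (t : R) (a b : Z) : fmode t (a + b) = fmode t a * fmode t b.
Proof. unfold fmode. rewrite eit_add, plus_IZR. f_equal; ring. Qed.

Lemma fmode_opp (t : R) (a : Z) : fmode t (- a) = / fmode t a.
Proof. unfold fmode. rewrite opp_IZR, <- eit_opp. f_equal; ring. Qed.

Lemma fmode_neq0 (t : R) (a : Z) : fmode t a <> 0.
Proof. apply eit_neq0. Qed.

Lemma fmode_at_0 (a : Z) : fmode 0 a = 1.
Proof. unfold fmode. rewrite Rmult_0_r. apply eit_0. Qed.

Lemma fmode_1 (t : R) : fmode t 1 = eit t.
Proof. unfold fmode. rewrite Rmult_1_l. reflexivity. Qed.

(** * Finite sums and limits *)

Fixpoint csum (f : nat -> C) (J : nat) : C :=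
  match J with O => 0 | S J' => csum f J' + f J' end.

Lemma csum_ext (f g : nat -> C) (J : nat) :
  (forall k, (k < J)%nat -> f k = g k) -> csum f J = csum g J.
Proof. induction J; simpl; intros H; auto. rewrite IHJ, H; auto; intros; apply H; lia. Qed.

Lemma csum_plus (f g : nat -> C) (J : nat) :
  csum (fun k => f k + g k) J = csum f J + csum g J.
Proof. induction J; simpl. ring. rewrite IHJ; ring. Qed.

Lemma csum_minus (f g : nat -> C) (J : nat) :
  csum (fun k => f k - g k) J = csum f J - csum g J.
Proof. induction J; simpl. ring. rewrite IHJ; ring. Qed.

Lemma csum_scal (c : C) (f : nat -> C) (J : nat) :
  csum (fun k => c * f k) J = c * csum f J.
Proof. induction J; simpl. ring. rewrite IHJ; ring. Qed.

Lemma csum_trailing_zeros (f : nat -> C) (J J' : nat) :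
  (J <= J')%nat -> (forall k, (J <= k)%nat -> f k = 0) -> csum f J' = csum f J.
Proof. intros HJ Hz. induction HJ; auto. simpl. rewrite IHHJ, Hz; [ring|lia]. Qed.

Lemma csum_shift (f : nat -> C) (J : nat) : csum f (S J) = f O + csum (fun k => f (S k)) J.
Proof.
  induction J. simpl; ring.
  change (csum f (S (S J))) with (csum f (S J) + f (S J)). rewrite IHJ; simpl; ring.
Qed.

Lemma csum_delta (a : nat -> C) (k0 J : nat) :
  csum (fun k => if Nat.eq_dec k k0 then a k else 0) J = if Nat.ltb k0 J then a k0 else 0.
Proof.
  induction J; simpl; auto. rewrite IHJ.
  destruct (Nat.eq_dec J k0); destruct (Nat.ltb_spec k0 J); destruct (Nat.ltb_spec k0 (S J));
    subst; try lia; ring.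
Qed.

Fixpoint rsum (f : nat -> R) (J : nat) : R :=
  match J with O => 0%R | S J' => (rsum f J' + f J')%R end.

Lemma rsum_ext (f g : nat -> R) (J : nat) :
  (forall k, (k < J)%nat -> f k = g k) -> rsum f J = rsum g J.
Proof. induction J; simpl; intros H; auto. rewrite IHJ, H; auto; intros; apply H; lia. Qed.

Lemma rsum_le (f g : nat -> R) (J : nat) :
  (forall k, (k < J)%nat -> (f k <= g k)%R) -> (rsum f J <= rsum g J)%R.
Proof.
  induction J; simpl; intros H. lra.
  assert (rsum f J <= rsum g J)%R by (apply IHJ; intros; apply H; lia).
  specialize (H J ltac:(lia)). lra.
Qed.

Lemma rsum_nonneg (f : nat -> R) (J : nat) :
  (forall k, (0 <= f k)%R) -> (0 <= rsum f J)%R.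
Proof. intros H. induction J; simpl. lra. specialize (H J). lra. Qed.

Lemma rsum_plus (f g : nat -> R) (J : nat) :
  rsum (fun k => f k + g k)%R J = (rsum f J + rsum g J)%R.
Proof. induction J; simpl. ring. rewrite IHJ; ring. Qed.

Lemma rsum_scal (c : R) (f : nat -> R) (J : nat) :
  rsum (fun k => c * f k)%R J = (c * rsum f J)%R.
Proof. induction J; simpl. ring. rewrite IHJ; ring. Qed.

Lemma rsum_le_longer (f : nat -> R) (J J' : nat) :
  (J <= J')%nat -> (forall k, (0 <= f k)%R) -> (rsum f J <= rsum f J')%R.
Proof. intros HJ Hf. induction HJ. lra. simpl. specialize (Hf m). lra. Qed.

Lemma rsum_shift (f : nat -> R) (J : nat) :
  rsum f (S J) = (f O + rsum (fun k => f (S k)) J)%R.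
Proof.
  induction J. simpl; ring.
  change (rsum f (S (S J))) with (rsum f (S J) + f (S J))%R. rewrite IHJ; simpl; ring.
Qed.

Lemma rsum_split (f : nat -> R) (a b : nat) :
  rsum f (a + b) = (rsum f a + rsum (fun i => f (a + i)%nat) b)%R.
Proof.
  induction b; simpl. rewrite Nat.add_0_r; ring.
  rewrite Nat.add_succ_r. simpl. rewrite IHb. ring.
Qed.

Lemma Cmod_csum (f : nat -> C) (J : nat) : (Cmod (csum f J) <= rsum (fun k => Cmod (f k)) J)%R.
Proof. induction J; simpl. rewrite Cmod_0; lra. eapply Rle_trans. apply Cmod_triangle. lra. Qed.

Definition cv_nat (u : nat -> C) (L : C) : Prop :=
  forall eps : R, (0 < eps)%R -> exists M, forall m, (M <= m)%nat -> (Cmod (u m - L) < eps)%R.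

Definition lim_nat (u : nat -> C) : C :=
  (real (Lim_seq (fun m => fst (u m))), real (Lim_seq (fun m => snd (u m)))).

Lemma Cmod_le_Rabs_sum (z : C) : (Cmod z <= Rabs (fst z) + Rabs (snd z))%R.
Proof.
  destruct z as [a b]. unfold Cmod; simpl.
  pose proof (Rabs_pos a); pose proof (Rabs_pos b).
  rewrite <- (sqrt_square (Rabs a + Rabs b)) by lra. apply sqrt_le_1_alt.
  assert (a * a = Rabs a * Rabs a)%R by (rewrite <- Rabs_mult, Rabs_right; nra).
  assert (b * b = Rabs b * Rabs b)%R by (rewrite <- Rabs_mult, Rabs_right; nra).
  nra.
Qed.

Lemma Rabs_snd_le_Cmod (z : C) : (Rabs (snd z) <= Cmod z)%R.
Proof. apply (Rle_trans _ _ _ (Rmax_r _ _) (Rmax_Cmod z)). Qed.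

Lemma Cmod_small_eq0 (x : C) : (forall eps, (0 < eps)%R -> (Cmod x < eps)%R) -> x = 0.
Proof.
  intros H. apply Cmod_eq_0. destruct (Cmod_ge_0 x) as [Hx|]; auto.
  specialize (H _ Hx). lra.
Qed.

Lemma is_lim_seq_of_cauchy (w : nat -> R) :
  (forall eps, (0 < eps)%R ->
     exists M, forall m p, (M <= m)%nat -> (Rabs (w (m + p)%nat - w m) <= eps)%R) ->
  is_lim_seq w (real (Lim_seq w)).
Proof.
  intros H. apply Lim_seq_correct', ex_lim_seq_cauchy_corr. intros eps.
  destruct (H (eps / 4)%R) as [M HM]. { destruct eps; simpl; lra. }
  exists M. intros n m Hn Hm.
  assert (Hnm : forall a c, (M <= a)%nat -> (a <= c)%nat -> (Rabs (w c - w a) <= eps / 4)%R).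
  { intros a c Ha Hc. replace c with (a + (c - a))%nat by lia. apply HM; lia. }
  destruct eps as [e He]; simpl in *.
  destruct (Nat.le_ge_cases n m).
  - rewrite Rabs_minus_sym. eapply Rle_lt_trans. apply Hnm; eauto. lra.
  - eapply Rle_lt_trans. apply Hnm; eauto. lra.
Qed.

Lemma cv_nat_cauchy (u : nat -> C) :
  (forall eps, (0 < eps)%R ->
     exists M, forall m p, (M <= m)%nat -> (Cmod (u (m + p)%nat - u m) <= eps)%R) ->
  cv_nat u (lim_nat u).
Proof.
  intros H.
  assert (A1 : is_lim_seq (fun m => fst (u m)) (fst (lim_nat u))).
  { apply is_lim_seq_of_cauchy. intros eps He. destruct (H eps He) as [M HM].
    exists M. intros m p Hm. eapply Rle_trans; [|apply (HM m p Hm)].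
    apply (re_le_Cmod (u (m + p)%nat - u m)). }
  assert (A2 : is_lim_seq (fun m => snd (u m)) (snd (lim_nat u))).
  { apply is_lim_seq_of_cauchy. intros eps He. destruct (H eps He) as [M HM].
    exists M. intros m p Hm. eapply Rle_trans; [|apply (HM m p Hm)].
    apply (Rabs_snd_le_Cmod (u (m + p)%nat - u m)). }
  apply is_lim_seq_spec in A1. apply is_lim_seq_spec in A2.
  intros eps He. destruct (A1 (mkposreal (eps/2) ltac:(lra))) as [N1 HN1].
  destruct (A2 (mkposreal (eps/2) ltac:(lra))) as [N2 HN2].
  exists (max N1 N2). intros m Hm. eapply Rle_lt_trans. apply Cmod_le_Rabs_sum.
  specialize (HN1 m ltac:(lia)). specialize (HN2 m ltac:(lia)). simpl in *.
  unfold Rminus in *. lra.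
Qed.

Lemma cv_nat_le (u : nat -> C) (L v : C) (c : R) (M : nat) :
  cv_nat u L -> (forall m, (M <= m)%nat -> (Cmod (u m - v) <= c)%R) -> (Cmod (L - v) <= c)%R.
Proof.
  intros HL Hb. apply Rnot_lt_le. intros Hc.
  destruct (HL (Cmod (L - v) - c)%R ltac:(lra)) as [M' HM'].
  specialize (HM' (max M M') ltac:(lia)). specialize (Hb (max M M') ltac:(lia)).
  rewrite <- Cmod_opp in HM'.
  pose proof (Cmod_triangle (- (u (max M M') - L)) (u (max M M') - v)) as Ht.
  replace (- (u (max M M') - L) + (u (max M M') - v)) with (L - v) in Ht by ring. lra.
Qed.

Lemma cv_nat_cauchy_rate (u : nat -> C) (eps : R) (M : nat) :
  cv_nat u (lim_nat u) -> (forall m p, (M <= m)%nat -> (Cmod (u (m + p)%nat - u m) <= eps)%R) ->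
  forall m, (M <= m)%nat -> (Cmod (u m - lim_nat u) <= eps)%R.
Proof.
  intros HL HM m Hm. rewrite <- Cmod_opp.
  replace (- (u m - lim_nat u)) with (lim_nat u - u m) by ring.
  apply (cv_nat_le u _ _ _ m HL). intros m' Hm'.
  replace m' with (m + (m' - m))%nat by lia. apply HM; lia.
Qed.

Lemma cv_nat_unique (u : nat -> C) (L L' : C) : cv_nat u L -> cv_nat u L' -> L = L'.
Proof.
  intros H1 H2. cut (L - L' = 0).
  { intros H. replace L with (L - L' + L') by ring. rewrite H; ring. }
  apply Cmod_small_eq0. intros eps He.
  destruct (H1 (eps/2)%R ltac:(lra)) as [M1 HM1]. destruct (H2 (eps/2)%R ltac:(lra)) as [M2 HM2].
  specialize (HM1 (max M1 M2) ltac:(lia)). specialize (HM2 (max M1 M2) ltac:(lia)).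
  replace (L - L') with (- (u (max M1 M2) - L) + (u (max M1 M2) - L')) by ring.
  eapply Rle_lt_trans. apply Cmod_triangle. rewrite Cmod_opp. lra.
Qed.

Lemma cv_nat_ext (u v : nat -> C) (L : C) :
  (forall m, u m = v m) -> cv_nat u L -> cv_nat v L.
Proof. intros E H eps He. destruct (H eps He) as [M HM]. exists M. intros; rewrite <- E; auto. Qed.

Lemma cv_nat_shift (u : nat -> C) (L : C) : cv_nat u L -> cv_nat (fun m => u (S m)) L.
Proof. intros H eps He. destruct (H eps He) as [M HM]. exists M. intros; apply HM; lia. Qed.

Lemma cv_nat_const (c : C) : cv_nat (fun _ => c) c.
Proof.
  intros eps He. exists O. intros. replace (c - c) with (RtoC 0) by ring. rewrite Cmod_0; auto.
Qed.

Lemma cv_nat_plus (u v : nat -> C) (L L' : C) :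
  cv_nat u L -> cv_nat v L' -> cv_nat (fun m => u m + v m) (L + L').
Proof.
  intros H1 H2 eps He.
  destruct (H1 (eps/2)%R ltac:(lra)) as [M1 HM1]. destruct (H2 (eps/2)%R ltac:(lra)) as [M2 HM2].
  exists (max M1 M2). intros m Hm. specialize (HM1 m ltac:(lia)). specialize (HM2 m ltac:(lia)).
  replace (u m + v m - (L + L')) with ((u m - L) + (v m - L')) by ring.
  eapply Rle_lt_trans. apply Cmod_triangle. lra.
Qed.

Lemma cv_nat_scal (c : C) (u : nat -> C) (L : C) : cv_nat u L -> cv_nat (fun m => c * u m) (c * L).
Proof.
  intros H eps He. pose proof (Cmod_ge_0 c).
  destruct (H (eps / (Cmod c + 1))%R) as [M HM]. { apply Rdiv_lt_0_compat; lra. }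
  exists M. intros m Hm. specialize (HM m Hm).
  replace (c * u m - c * L) with (c * (u m - L)) by ring. rewrite Cmod_mult.
  pose proof (Cmod_ge_0 (u m - L)).
  apply (Rmult_lt_compat_l (Cmod c + 1)) in HM; [|lra].
  replace ((Cmod c + 1) * (eps / (Cmod c + 1)))%R with eps in HM by (field; lra). nra.
Qed.

Lemma cv_nat_minus (u v : nat -> C) (L L' : C) :
  cv_nat u L -> cv_nat v L' -> cv_nat (fun m => u m - v m) (L - L').
Proof.
  intros H1 H2. apply cv_nat_plus; auto.
  apply (cv_nat_ext (fun m => (-1) * v m)); [intros; ring|].
  replace (- L') with ((-1) * L') by ring. apply cv_nat_scal; auto.
Qed.

Lemma cv_nat_csum (X : nat -> nat -> C) (L : nat -> C) (K : nat) :
  (forall k, (k < K)%nat -> cv_nat (fun m => X m k) (L k)) ->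
  cv_nat (fun m => csum (X m) K) (csum L K).
Proof.
  induction K; intros H; simpl. apply cv_nat_const.
  apply cv_nat_plus. apply IHK; intros; apply H; lia. apply H; lia.
Qed.

Lemma ball_R_of_Rabs (x y eps : R) : (Rabs (y - x) < eps)%R -> @ball R_UniformSpace x eps y.
Proof. auto. Qed.

Lemma ball_C_of_Cmod (x y : C) (eps : R) :
  (Cmod (y - x) < eps)%R -> @ball C_R_NormedModule x eps y.
Proof.
  intros H. split; apply ball_R_of_Rabs; eapply Rle_lt_trans; try apply H.
  - apply (re_le_Cmod (y - x)).
  - apply (Rabs_snd_le_Cmod (y - x)).
Qed.

Lemma is_series_of_cv_nat (a : nat -> C) (L : C) :
  cv_nat (csum a) L -> is_series (K := R_AbsRing) (V := C_R_NormedModule) a L.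
Proof.
  intros H P [eps HP]. destruct (H eps (cond_pos eps)) as [M HM].
  exists M. intros m Hm. apply HP.
  replace (sum_n (G := C_R_NormedModule) a m) with (csum a (S m)).
  - apply ball_C_of_Cmod, HM; lia.
  - clear. induction m. rewrite sum_O. apply injective_projections; simpl; ring.
    rewrite sum_Sn, <- IHm. reflexivity.
Qed.

Lemma cv_nat_of_filterlim (h : nat -> C) (L : C) :
  filterlim (U := C_R_CompleteNormedModule) h eventually (locally L) -> cv_nat h L.
Proof.
  intros H eps He.
  destruct (H _ (locally_ball (T := C_R_CompleteNormedModule) L (mkposreal (eps/2) ltac:(lra))))
    as [M HM].
  exists M. intros m Hm. destruct (HM m Hm) as [H1 H2].
  eapply Rle_lt_trans. apply Cmod_le_Rabs_sum. simpl in *.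
  apply (Rlt_le_trans _ (eps/2 + eps/2)). apply Rplus_lt_compat; [exact H1|exact H2]. lra.
Qed.

Lemma cv_plus (a b : Z -> C) (A B : C) :
  cv_pinf a A -> cv_pinf b B -> cv_pinf (fun n => a n + b n) (A + B).
Proof.
  intros H1 H2 eps He.
  destruct (H1 (eps/2)%R ltac:(lra)) as [N1 HN1]. destruct (H2 (eps/2)%R ltac:(lra)) as [N2 HN2].
  exists (Z.max N1 N2). intros n Hn. specialize (HN1 n ltac:(lia)). specialize (HN2 n ltac:(lia)).
  replace (a n + b n - (A + B)) with ((a n - A) + (b n - B)) by ring.
  eapply Rle_lt_trans. apply Cmod_triangle. lra.
Qed.

Lemma cv_opp (a : Z -> C) (A : C) : cv_pinf a A -> cv_pinf (fun n => - a n) (- A).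
Proof.
  intros H eps He. destruct (H eps He) as [N HN]. exists N. intros n Hn.
  replace (- a n - - A) with (- (a n - A)) by ring. rewrite Cmod_opp. auto.
Qed.

Lemma cv_mult (a b : Z -> C) (A B : C) :
  cv_pinf a A -> cv_pinf b B -> cv_pinf (fun n => a n * b n) (A * B).
Proof.
  intros H1 H2 eps He. pose proof (Cmod_ge_0 A). pose proof (Cmod_ge_0 B).
  set (K := (Cmod A + Cmod B + 1)%R).
  set (e1 := Rmin 1 (eps / (2 * K))%R).
  assert (He1 : (0 < e1)%R) by (apply Rmin_pos; [lra|apply Rdiv_lt_0_compat; unfold K; lra]).
  assert (e1 <= 1)%R by apply Rmin_l.
  assert (e1 * K <= eps / 2)%R.
  { replace (eps / 2)%R with (eps / (2 * K) * K)%R by (field; unfold K; lra).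
    apply Rmult_le_compat_r; [unfold K; lra|apply Rmin_r]. }
  destruct (H1 e1 He1) as [N1 HN1]. destruct (H2 e1 He1) as [N2 HN2].
  exists (Z.max N1 N2). intros n Hn. specialize (HN1 n ltac:(lia)). specialize (HN2 n ltac:(lia)).
  replace (a n * b n - A * B) with ((a n - A) * (b n - B) + (a n - A) * B + A * (b n - B)) by ring.
  eapply Rle_lt_trans. apply Cmod_triangle. eapply Rle_lt_trans. apply Rplus_le_compat_r.
  apply Cmod_triangle. rewrite !Cmod_mult.
  pose proof (Cmod_ge_0 (a n - A)). pose proof (Cmod_ge_0 (b n - B)). unfold K in *. nra.
Qed.

Lemma cv_ext (a b : Z -> C) (A : C) : (forall n, a n = b n) -> cv_pinf a A -> cv_pinf b A.
Proof. intros E H eps Hp. destruct (H eps Hp) as [N HN]. exists N. intros; rewrite <- E; auto. Qed.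

Lemma cv_unimodular_0 (a u : Z -> C) :
  cv_pinf a 0 -> (forall n, Cmod (u n) = 1%R) -> cv_pinf (fun n => u n * a n) 0.
Proof.
  intros H Hu eps He. destruct (H eps He) as [N HN]. exists N. intros n Hn.
  specialize (HN n Hn). replace (u n * a n - 0) with (u n * (a n - 0)) by ring.
  rewrite Cmod_mult, Hu. lra.
Qed.

Lemma cv_of_eventual_bound (a : Z -> C) (A : C) :
  (forall eps, (0 < eps)%R -> exists N, forall n, (N <= n)%Z -> (Cmod (a n - A) <= eps)%R) ->
  cv_pinf a A.
Proof.
  intros H eps He. destruct (H (eps / 2)%R ltac:(lra)) as [N HN].
  exists N. intros n Hn. specialize (HN n Hn). lra.
Qed.

Lemma cv_const_eq (a : Z -> C) (L : C) :
  (forall n, a n = a (n + 1)%Z) -> cv_pinf a L -> forall n, a n = L.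
Proof.
  intros Ha HL n. assert (Hm : forall m : nat, a n = a (n + Z.of_nat m)%Z).
  { induction m. f_equal; lia. rewrite IHm, Ha. f_equal; lia. }
  cut (a n - L = 0). { intros H. replace (a n) with (a n - L + L) by ring. rewrite H; ring. }
  apply Cmod_small_eq0. intros eps He. destruct (HL eps He) as [N HN].
  rewrite (Hm (Z.to_nat (N - n))). apply HN. lia.
Qed.

(** * Coefficient sequences *)

(* A pair [v] of coefficient sequences stands for the vector of trigonometric polynomials
   [sum_k v_k e^(i sigma (n + k) t)], see [eval2]; distances are truncated l^1 norms, and
   bounds uniform in the truncation [J] control the full l^1 norm. *)
Definition Seq := nat -> C.
Definition Seq2 := (Seq * Seq)%type.

Definition tnorm (J : nat) (X : Seq) : R := rsum (fun k => Cmod (X k)) J.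
Definition dist1 (J : nat) (X Y : Seq) : R := tnorm J (fun k => X k - Y k).
Definition dist2 (J : nat) (u v : Seq2) : R :=
  (dist1 J (fst u) (fst v) + dist1 J (snd u) (snd v))%R.

Definition supported (X : Seq) (L : nat) : Prop := forall k, (L <= k)%nat -> X k = 0.
Definition supported2 (v : Seq2) (L : nat) : Prop := supported (fst v) L /\ supported (snd v) L.

Definition shift2 (X : Seq) : Seq := fun k => match k with S (S k') => X k' | _ => 0 end.
Definition delta0 : Seq := fun k => match k with O => 1 | _ => 0 end.
Definition zseq : Seq := fun _ => 0.

Lemma tnorm_nonneg (J : nat) (X : Seq) : (0 <= tnorm J X)%R.
Proof. apply rsum_nonneg; intros; apply Cmod_ge_0. Qed.

Lemma tnorm_ext (J : nat) (X Y : Seq) : (forall k, X k = Y k) -> tnorm J X = tnorm J Y.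
Proof. intros H; unfold tnorm; apply rsum_ext; intros; rewrite H; auto. Qed.

Lemma tnorm_plus_le (J : nat) (X Y : Seq) :
  (tnorm J (fun k => (X k + Y k)%C) <= tnorm J X + tnorm J Y)%R.
Proof. unfold tnorm. rewrite <- rsum_plus. apply rsum_le. intros; apply Cmod_triangle. Qed.

Lemma tnorm_scal (J : nat) (c : C) (X : Seq) : tnorm J (fun k => c * X k) = (Cmod c * tnorm J X)%R.
Proof. unfold tnorm. rewrite <- rsum_scal. apply rsum_ext. intros; apply Cmod_mult. Qed.

Lemma tnorm_shift2_le (J : nat) (X : Seq) : (tnorm J (shift2 X) <= tnorm J X)%R.
Proof.
  unfold tnorm. eapply Rle_trans.
  - apply (rsum_le_longer _ J (S (S J))); [lia|intros; apply Cmod_ge_0].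
  - rewrite !rsum_shift. simpl. rewrite Cmod_0. right. ring.
Qed.

Lemma tnorm_zseq (J : nat) : tnorm J zseq = 0%R.
Proof. unfold tnorm, zseq. induction J; simpl; auto. rewrite IHJ, Cmod_0; ring. Qed.

Lemma tnorm_delta0_le (J : nat) : (tnorm J delta0 <= 1)%R.
Proof.
  destruct J. unfold tnorm; simpl; lra.
  unfold tnorm. rewrite rsum_shift. simpl delta0 at 1. rewrite Cmod_1.
  replace (rsum _ J) with (tnorm J zseq) by reflexivity. rewrite tnorm_zseq. lra.
Qed.

Lemma dist1_nonneg (J : nat) (X Y : Seq) : (0 <= dist1 J X Y)%R.
Proof. apply tnorm_nonneg. Qed.

Lemma dist2_nonneg (J : nat) (u v : Seq2) : (0 <= dist2 J u v)%R.
Proof.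
  unfold dist2. pose proof (dist1_nonneg J (fst u) (fst v)).
  pose proof (dist1_nonneg J (snd u) (snd v)). lra.
Qed.

Lemma dist1_le_tnorm (J : nat) (X Y : Seq) : (dist1 J X Y <= tnorm J X + tnorm J Y)%R.
Proof.
  unfold dist1, tnorm. rewrite <- rsum_plus. apply rsum_le. intros k _.
  unfold Cminus. rewrite <- (Cmod_opp (Y k)). apply Cmod_triangle.
Qed.

Lemma dist1_triangle (J : nat) (X Y Z : Seq) :
  (dist1 J X Z <= dist1 J X Y + dist1 J Y Z)%R.
Proof.
  unfold dist1, tnorm. rewrite <- rsum_plus. apply rsum_le. intros.
  replace (X k - Z k) with ((X k - Y k) + (Y k - Z k)) by ring. apply Cmod_triangle.
Qed.

Lemma dist2_triangle (J : nat) (u v w : Seq2) :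
  (dist2 J u w <= dist2 J u v + dist2 J v w)%R.
Proof.
  unfold dist2. pose proof (dist1_triangle J (fst u) (fst v) (fst w)).
  pose proof (dist1_triangle J (snd u) (snd v) (snd w)). lra.
Qed.

Lemma dist2_refl (J : nat) (v : Seq2) : dist2 J v v = 0%R.
Proof.
  unfold dist2, dist1.
  rewrite (tnorm_ext J (fun k => fst v k - fst v k) zseq),
      (tnorm_ext J (fun k => snd v k - snd v k) zseq)
    by (intros; unfold zseq; ring).
  rewrite tnorm_zseq. ring.
Qed.

Lemma dist1_shift2_le (J : nat) (X Y : Seq) : (dist1 J (shift2 X) (shift2 Y) <= dist1 J X Y)%R.
Proof.
  unfold dist1. rewrite (tnorm_ext J _ (shift2 (fun k => X k - Y k))).
  - apply tnorm_shift2_le.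
  - intros [|[|k]]; simpl; ring.
Qed.

Lemma dist1_plus_scal (J : nat) (c : C) (X Y X' Y' : Seq) :
  (dist1 J (fun k => (X k + c * Y k)%C) (fun k => (X' k + c * Y' k)%C)
      <= dist1 J X X' + Cmod c * dist1 J Y Y')%R.
Proof.
  unfold dist1. rewrite <- tnorm_scal.
  rewrite (tnorm_ext J _ (fun k => (X k - X' k) + c * (Y k - Y' k))) by (intros; ring).
  apply tnorm_plus_le.
Qed.

Lemma dist1_minus (J : nat) (X Y X' Y' : Seq) :
  (dist1 J (fun k => (X k - Y k)%C) (fun k => (X' k - Y' k)%C) <= dist1 J X X' + dist1 J Y Y')%R.
Proof.
  pose proof (dist1_plus_scal J (- (1)) X Y X' Y') as H.
  rewrite Cmod_opp, Cmod_1, Rmult_1_l in H. eapply Rle_trans; [|apply H].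
  right. apply tnorm_ext. intros; ring.
Qed.

Lemma Cmod_le_dist1 (J k : nat) (X Y : Seq) : (k < J)%nat -> (Cmod (X k - Y k)%C <= dist1 J X Y)%R.
Proof.
  intros Hk. unfold dist1, tnorm. induction J. lia. simpl.
  pose proof (rsum_nonneg (fun k => Cmod (X k - Y k)) J ltac:(intros; apply Cmod_ge_0)).
  destruct (Nat.eq_dec k J) as [->|]. lra.
  pose proof (IHJ ltac:(lia)). pose proof (Cmod_ge_0 (X J - Y J)). lra.
Qed.

Lemma csum_dist1 (J : nat) (X Y : Seq) : (Cmod (csum X J - csum Y J)%C <= dist1 J X Y)%R.
Proof. rewrite <- csum_minus. apply Cmod_csum. Qed.

Definition coord (i : bool) {A : Type} (p : A * A) : A := if i then fst p else snd p.

Lemma coord_dist (i : bool) (J : nat) (u v : Seq2) :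
  (dist1 J (coord i u) (coord i v) <= dist2 J u v)%R.
Proof.
  unfold dist2. pose proof (dist1_nonneg J (fst u) (fst v)).
  pose proof (dist1_nonneg J (snd u) (snd v)). destruct i; simpl; lra.
Qed.

Lemma coord_supported (i : bool) (v : Seq2) (L : nat) :
  supported2 v L -> supported (coord i v) L.
Proof. intros [H1 H2]; destruct i; auto. Qed.

Lemma vec2_eq_coord (v w : vec2) : (forall i, coord i v = coord i w) -> v = w.
Proof. intros H. apply injective_projections; [apply (H true)|apply (H false)]. Qed.

Lemma supported_mono (X : Seq) (L L' : nat) : (L <= L')%nat -> supported X L -> supported X L'.
Proof. intros HL H k Hk. apply H. lia. Qed.

Lemma supported_shift2 (X : Seq) (L : nat) : supported X L -> supported (shift2 X) (S (S L)).
Proof. intros H [|[|k]] Hk; try lia. apply H; lia. Qed.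

(** * Backward iteration of contractions *)

Fixpoint iter_back (St : Z -> Seq2 -> Seq2) (b : Seq2) (m : nat) (n : Z) : Seq2 :=
  match m with O => b | S m' => St n (iter_back St b m' (n + 1)%Z) end.

Fixpoint prod_from (G : Z -> R) (n : Z) (m : nat) : R :=
  match m with O => 1%R | S m' => (G n * prod_from G (n + 1)%Z m')%R end.

Definition excess_sum (G : Z -> R) (n : Z) (m : nat) : R :=
  rsum (fun i => G (n + Z.of_nat i)%Z - 1)%R m.

Definition quadratic_excess (G : Z -> R) : Prop :=
  exists c N, (0 <= c)%R /\ (2 <= N)%Z /\ forall k, (N <= k)%Z -> (G k - 1 <= c / IZR k ^ 2)%R.

Lemma exp_le_compat (x y : R) : (x <= y)%R -> (exp x <= exp y)%R.
Proof. intros [H| ->]; [left; apply exp_increasing, H|lra]. Qed.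

Section ProductBounds.

Variable G : Z -> R.
Hypothesis G_ge1 : forall k, (1 <= G k)%R.

Lemma excess_sum_nonneg (n : Z) (m : nat) : (0 <= excess_sum G n m)%R.
Proof. apply rsum_nonneg. intros k. pose proof (G_ge1 (n + Z.of_nat k)). lra. Qed.

Lemma excess_sum_succ (n : Z) (m : nat) :
  excess_sum G n (S m) = (G n - 1 + excess_sum G (n + 1) m)%R.
Proof.
  unfold excess_sum. rewrite rsum_shift, Z.add_0_r. f_equal.
  apply rsum_ext. intros. do 2 f_equal. lia.
Qed.

Lemma prod_from_ge1 (n : Z) (m : nat) : (1 <= prod_from G n m)%R.
Proof.
  revert n; induction m; simpl; intros. lra.
  specialize (IHm (n + 1)%Z). specialize (G_ge1 n). nra.
Qed.

Lemma prod_from_le_exp (n : Z) (m : nat) : (prod_from G n m <= exp (excess_sum G n m))%R.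
Proof.
  revert n; induction m; intros; cbn [prod_from]. unfold excess_sum; simpl; rewrite exp_0; lra.
  rewrite excess_sum_succ, exp_plus. pose proof (IHm (n + 1)%Z).
  pose proof (prod_from_ge1 (n + 1) m). pose proof (exp_ineq1_le (G n - 1)). pose proof (G_ge1 n).
  apply Rmult_le_compat; lra.
Qed.

Lemma prod_from_sub1_le (n : Z) (m : nat) :
  (prod_from G n m - 1 <= excess_sum G n m * prod_from G n m)%R.
Proof.
  revert n; induction m; intros; cbn [prod_from]. unfold excess_sum; simpl; lra.
  rewrite excess_sum_succ. pose proof (IHm (n + 1)%Z).
  pose proof (prod_from_ge1 (n + 1) m). pose proof (G_ge1 n).
  pose proof (excess_sum_nonneg (n + 1) m).
  set (P := prod_from G (n + 1) m) in *. set (S := excess_sum G (n + 1) m) in *.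
  assert (0 <= (G n - 1) * P * (G n - 1))%R by (apply Rmult_le_pos; [apply Rmult_le_pos|]; lra).
  assert (S * P <= S * (G n * P))%R by (apply Rmult_le_compat_l; nra).
  nra.
Qed.

Hypothesis G_excess : quadratic_excess G.

(* [c / k^2 <= c (1/(k-1) - 1/k)] telescopes. *)
Lemma excess_tail_le :
  exists c N1, (0 <= c)%R /\ (2 <= N1)%Z /\
    forall N p, (N1 <= N)%Z -> (excess_sum G N p <= c / (IZR N - 1) <= c)%R.
Proof.
  destruct G_excess as (c & N1 & Hc & HN1 & Hk). exists c, N1. split; [auto|split; [auto|]].
  intros N p HN. split.
  - set (a := fun i : nat => (/ (IZR (N + Z.of_nat i) - 1))%R).
    assert (Hb : forall i, (G (N + Z.of_nat i)%Z - 1 <= c * (a i - a (S i)))%R).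
    { intros i. unfold a. replace (N + Z.of_nat (S i))%Z with (N + Z.of_nat i + 1)%Z by lia.
      eapply Rle_trans. apply Hk. lia. rewrite (plus_IZR _ 1). set (x := IZR (N + Z.of_nat i)).
      assert (2 <= x)%R by (unfold x; apply IZR_le; lia).
      replace (x + 1 - 1)%R with x by ring.
      replace (/ (x - 1) - / x)%R with (/ (x * (x - 1)))%R by (field; lra).
      unfold Rdiv. apply Rmult_le_compat_l; auto. apply Rinv_le_contravar; simpl; nra. }
    assert (Htel : forall p, rsum (fun i => c * (a i - a (S i)))%R p = (c * (a O - a p))%R).
    { induction p0; simpl. ring. rewrite IHp0. ring. }
    eapply Rle_trans. apply rsum_le. intros k _. apply Hb. rewrite Htel. unfold a.
    assert (2 <= IZR (N + Z.of_nat p))%R by (apply IZR_le; lia).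
    assert (0 < / (IZR (N + Z.of_nat p) - 1))%R by (apply Rinv_0_lt_compat; lra).
    rewrite Z.add_0_r. unfold Rdiv. nra.
  - assert (2 <= IZR N)%R by (apply IZR_le; lia).
    unfold Rdiv. rewrite <- (Rmult_1_r c) at 2. apply Rmult_le_compat_l; auto.
    rewrite <- Rinv_1. apply Rinv_le_contravar; lra.
Qed.

Lemma prod_tail_small (eps : R) : (0 < eps)%R ->
  exists N, forall n p, (N <= n)%Z -> (prod_from G n p - 1 <= eps)%R.
Proof.
  intros He. destruct excess_tail_le as (c & N1 & Hc & HN1 & Htail).
  set (K := (eps / (exp c * (c + 1)))%R).
  assert (HK : (0 < K)%R) by (apply Rdiv_lt_0_compat; auto; pose proof (exp_pos c); nra).
  destruct (archimed (/ K)) as [Hup _].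
  exists (Z.max N1 (up (/ K) + 2)). intros n p Hn.
  destruct (Htail n p ltac:(lia)) as [Hs Hsc].
  assert (Hn1 : (/ K + 1 <= IZR n - 1)%R).
  { assert (IZR (up (/ K)) + 2 <= IZR n)%R by (rewrite <- plus_IZR; apply IZR_le; lia). lra. }
  assert (HsK : (excess_sum G n p <= c * K)%R).
  { eapply Rle_trans; [apply Hs|]. unfold Rdiv. apply Rmult_le_compat_l; auto.
    rewrite <- (Rinv_inv K). apply Rinv_le_contravar; [apply Rinv_0_lt_compat|]; lra. }
  pose proof (prod_from_sub1_le n p). pose proof (prod_from_le_exp n p).
  pose proof (excess_sum_nonneg n p). pose proof (prod_from_ge1 n p).
  assert (exp (excess_sum G n p) <= exp c)%R by (apply exp_le_compat; lra).
  assert (Heps : (c * K * exp c <= eps)%R).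
  { unfold K. replace (c * (eps / (exp c * (c + 1))) * exp c)%R with (eps * c / (c + 1))%R
      by (field; pose proof (exp_pos c); lra).
    apply (Rmult_le_reg_r (c + 1)); [lra|].
    unfold Rdiv; rewrite Rmult_assoc, Rinv_l by lra. nra. }
  assert (excess_sum G n p * prod_from G n p <= c * K * exp c)%R
    by (apply Rmult_le_compat; lra).
  lra.
Qed.

Lemma prod_from_bounded (n : Z) : exists B, forall m, (prod_from G n m <= B)%R.
Proof.
  destruct excess_tail_le as (c & N1 & Hc & HN1 & Htail).
  set (i0 := Z.to_nat (N1 - n)).
  exists (exp (excess_sum G n i0 + c)). intros m.
  eapply Rle_trans. apply prod_from_le_exp. apply exp_le_compat.
  assert (Hnn : forall k, (0 <= G (n + Z.of_nat k)%Z - 1)%R)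
    by (intros k; pose proof (G_ge1 (n + Z.of_nat k)); lra).
  destruct (Nat.le_gt_cases m i0).
  - pose proof (rsum_le_longer _ m i0 H Hnn). unfold excess_sum. lra.
  - unfold excess_sum. replace m with (i0 + (m - i0))%nat by lia. rewrite rsum_split.
    rewrite (rsum_ext (fun i => G (n + Z.of_nat (i0 + i))%Z - 1)%R
      (fun i => G (n + Z.of_nat i0 + Z.of_nat i)%Z - 1)%R)
      by (intros; do 2 f_equal; lia).
    destruct (Htail (n + Z.of_nat i0)%Z (m - i0)%nat ltac:(unfold i0; lia)).
    unfold excess_sum in *. lra.
Qed.

End ProductBounds.

(* These conditions make the backward iterates [St n (St (n+1) (... b))] converge, because
   [prod G] does. *)
Record contracting (St : Z -> Seq2 -> Seq2) (b : Seq2) (G : Z -> R) : Prop := {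
  contr_G_ge1 : forall k, (1 <= G k)%R;
  contr_excess : quadratic_excess G;
  contr_lipschitz : forall n J u v, (dist2 J (St n u) (St n v) <= G n * dist2 J u v)%R;
  contr_base : forall n J, (dist2 J (St n b) b <= G n - 1)%R;
  contr_support : forall n v L, supported2 v L -> supported2 (St n v) (S (S L));
  contr_base_support : supported2 b 1 }.

Section Iteration.

Variables (St : Z -> Seq2 -> Seq2) (b : Seq2) (G : Z -> R).
Hypothesis HC : contracting St b G.

Lemma iter_support (m : nat) (n : Z) : supported2 (iter_back St b m n) (2 * m + 1).
Proof.
  revert n; induction m; intros n; simpl. apply (contr_base_support _ _ _ HC).
  replace (S (m + S (m + 0) + 1)) with (S (S (2 * m + 1))) by lia.
  apply (contr_support _ _ _ HC), IHm.
Qed.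

Lemma iter_dist_base (m : nat) (n : Z) (J : nat) :
  (dist2 J (iter_back St b m n) b <= prod_from G n m - 1)%R.
Proof.
  revert n; induction m; intros n; simpl.
  - rewrite dist2_refl; lra.
  - eapply Rle_trans. apply (dist2_triangle _ _ (St n b)).
    pose proof (contr_lipschitz _ _ _ HC n J (iter_back St b m (n + 1)) b).
    pose proof (contr_base _ _ _ HC n J). pose proof (IHm (n + 1)%Z).
    pose proof (contr_G_ge1 _ _ _ HC n). nra.
Qed.

Lemma iter_dist_step (m p : nat) (n : Z) (J : nat) :
  (dist2 J (iter_back St b (m + p) n) (iter_back St b m n)
   <= prod_from G n m * (prod_from G (n + Z.of_nat m) p - 1))%R.
Proof.
  revert n; induction m; intros n; simpl.
  - rewrite Z.add_0_r, Rmult_1_l. apply iter_dist_base.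
  - eapply Rle_trans. apply (contr_lipschitz _ _ _ HC).
    replace (n + Z.pos (Pos.of_succ_nat m))%Z with (n + 1 + Z.of_nat m)%Z by lia.
    pose proof (IHm (n + 1)%Z). pose proof (contr_G_ge1 _ _ _ HC n).
    pose proof (dist2_nonneg J (iter_back St b (m + p) (n + 1)) (iter_back St b m (n + 1))). nra.
Qed.

Lemma iter_near_base (eps : R) : (0 < eps)%R ->
  exists N, forall n m J, (N <= n)%Z -> (dist2 J (iter_back St b m n) b <= eps)%R.
Proof.
  intros He. destruct (prod_tail_small G (contr_G_ge1 _ _ _ HC) (contr_excess _ _ _ HC) eps He)
    as [N HN].
  exists N. intros n m J Hn. eapply Rle_trans. apply iter_dist_base. apply HN, Hn.
Qed.

Lemma iter_cauchy (n : Z) (eps : R) : (0 < eps)%R ->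
  exists M, forall m p J, (M <= m)%nat ->
    (dist2 J (iter_back St b (m + p) n) (iter_back St b m n) <= eps)%R.
Proof.
  intros He. pose proof (contr_G_ge1 _ _ _ HC) as HG.
  destruct (prod_from_bounded G HG (contr_excess _ _ _ HC) n) as [B HB].
  assert (HB1 : (1 <= B)%R) by (eapply Rle_trans; [apply (prod_from_ge1 G HG n O)|apply HB]).
  destruct (prod_tail_small G HG (contr_excess _ _ _ HC) (eps / B)) as [N HN].
  { apply Rdiv_lt_0_compat; lra. }
  exists (Z.to_nat (N - n)). intros m p J Hm. eapply Rle_trans. apply iter_dist_step.
  specialize (HN (n + Z.of_nat m)%Z p ltac:(lia)). specialize (HB m).
  pose proof (prod_from_ge1 G HG n m). pose proof (prod_from_ge1 G HG (n + Z.of_nat m) p).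
  replace eps with (B * (eps / B))%R by (field; lra).
  apply Rmult_le_compat; lra.
Qed.

End Iteration.

(** * Trigonometric polynomials *)

Definition eval_seq (σ : Z) (X : Seq) (L : nat) (n : Z) (t : R) : C :=
  csum (fun k => X k * fmode t (σ * (n + Z.of_nat k))) L.

Definition eval2 (σ : Z) (v : Seq2) (L : nat) (n : Z) (t : R) : vec2 :=
  (eval_seq σ (fst v) L n t, eval_seq σ (snd v) L n t).

Lemma coord_eval2 (i : bool) (σ : Z) (v : Seq2) (L : nat) (n : Z) (t : R) :
  coord i (eval2 σ v L n t) = eval_seq σ (coord i v) L n t.
Proof. destruct i; reflexivity. Qed.

Lemma eval_seq_dist (σ : Z) (X X' : Seq) (L L' : nat) (n : Z) (t : R) :
  supported X L -> (L <= L')%nat ->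
  (Cmod (eval_seq σ X' L' n t - eval_seq σ X L n t) <= dist1 L' X' X)%R.
Proof.
  intros Hs HL. unfold eval_seq.
  rewrite <- (csum_trailing_zeros (fun k => X k * _) L L')
    by (auto; intros k Hk; rewrite Hs; auto; ring).
  rewrite <- csum_minus. eapply Rle_trans. apply Cmod_csum. right. apply rsum_ext. intros k _.
  replace (X' k * _ - _) with ((X' k - X k) * fmode t (σ * (n + Z.of_nat k))) by ring.
  rewrite Cmod_mult, Cmod_fmode. ring.
Qed.

Lemma eval_seq_at_0 (σ : Z) (X : Seq) (L : nat) (n : Z) : eval_seq σ X L n 0 = csum X L.
Proof. unfold eval_seq. apply csum_ext. intros. rewrite fmode_at_0. ring. Qed.

Lemma eval_seq_plus_scal (σ : Z) (X Y : Seq) (c : C) (L : nat) (n : Z) (t : R) :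
  eval_seq σ (fun k => X k + c * Y k) L n t = eval_seq σ X L n t + c * eval_seq σ Y L n t.
Proof.
  unfold eval_seq. rewrite <- csum_scal, <- csum_plus. apply csum_ext. intros. ring.
Qed.

Lemma eval_seq_minus (σ : Z) (X Y : Seq) (L : nat) (n : Z) (t : R) :
  eval_seq σ (fun k => X k - Y k) L n t = eval_seq σ X L n t - eval_seq σ Y L n t.
Proof. unfold eval_seq. rewrite <- csum_minus. apply csum_ext. intros. ring. Qed.

Lemma eval_seq_shift2 (σ : Z) (X : Seq) (L : nat) (n : Z) (t : R) :
  eval_seq σ (shift2 X) (S (S L)) n t = fmode t σ * eval_seq σ X L (n + 1) t.
Proof.
  unfold eval_seq. rewrite !csum_shift. simpl shift2. rewrite <- csum_scal.
  rewrite !Cmult_0_l, !Cplus_0_l. apply csum_ext. intros k _.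
  rewrite Cmult_assoc, (Cmult_comm (fmode t σ) (X k)), <- Cmult_assoc, <- fmode_add.
  do 2 f_equal. lia.
Qed.

Lemma eval_seq_pad (σ : Z) (X : Seq) (L : nat) (n : Z) (t : R) :
  supported X L -> eval_seq σ X (S (S L)) n t = / fmode t σ * eval_seq σ X L (n + 1) t.
Proof.
  intros Hs. unfold eval_seq.
  rewrite (csum_trailing_zeros _ L (S (S L))) by (auto; intros k Hk; rewrite Hs; auto; ring).
  rewrite <- csum_scal. apply csum_ext. intros k _.
  rewrite <- fmode_opp, Cmult_assoc, (Cmult_comm (fmode t (- σ)) (X k)), <- Cmult_assoc,
    <- fmode_add.
  do 2 f_equal. lia.
Qed.

Lemma eval2_dist (i : bool) (σ : Z) (v v' : Seq2) (L L' : nat) (n : Z) (t : R) :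
  supported2 v L -> (L <= L')%nat ->
  (Cmod (coord i (eval2 σ v' L' n t) - coord i (eval2 σ v L n t)) <= dist2 L' v' v)%R.
Proof.
  intros Hv HL. rewrite !coord_eval2.
  eapply Rle_trans; [apply eval_seq_dist; auto; apply coord_supported, Hv|apply coord_dist].
Qed.

Lemma is_RInt_cos_mult (s : Z) : s <> 0%Z ->
  is_RInt (fun t => cos (IZR s * t)) 0 (2 * PI) 0%R.
Proof.
  intros Hs. assert (IZR s <> 0%R) by (apply not_0_IZR; auto).
  assert (Hd : is_RInt (fun t => cos (IZR s * t)) 0 (2 * PI)
                 (minus (sin (IZR s * (2 * PI)) / IZR s) (sin (IZR s * 0) / IZR s))%R).
  { apply (is_RInt_derive (fun t => sin (IZR s * t) / IZR s)%R).
    - intros x _. auto_derive; auto. field; auto.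
    - intros x _. apply continuous_cos_comp, (continuous_scal_r (IZR s) (fun x : R => x)),
        continuous_id. }
  replace (minus (sin (IZR s * (2 * PI)) / IZR s) (sin (IZR s * 0) / IZR s))%R with 0%R in Hd; auto.
  rewrite Rmult_0_r, sin_0, (sin_eq_0_1 (IZR s * (2 * PI)))
    by (exists (2 * s)%Z; rewrite mult_IZR; ring).
  unfold minus, plus, opp; simpl. field; auto.
Qed.

Lemma is_RInt_sin_mult (s : Z) : s <> 0%Z ->
  is_RInt (fun t => sin (IZR s * t)) 0 (2 * PI) 0%R.
Proof.
  intros Hs. assert (IZR s <> 0%R) by (apply not_0_IZR; auto).
  assert (Hd : is_RInt (fun t => sin (IZR s * t)) 0 (2 * PI)
                 (minus (- cos (IZR s * (2 * PI)) / IZR s) (- cos (IZR s * 0) / IZR s))%R).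
  { apply (is_RInt_derive (fun t => - cos (IZR s * t) / IZR s)%R).
    - intros x _. auto_derive; auto. field; auto.
    - intros x _. apply continuous_sin_comp, (continuous_scal_r (IZR s) (fun x : R => x)),
        continuous_id. }
  replace (minus (- cos (IZR s * (2 * PI)) / IZR s) (- cos (IZR s * 0) / IZR s))%R
    with 0%R in Hd; auto.
  replace (IZR s * (2 * PI))%R with (2 * (IZR s * PI))%R by ring.
  rewrite cos_2a_sin, sin_eq_0_1 by (exists s; reflexivity). rewrite (Rmult_0_r (IZR s)), cos_0.
  unfold minus, plus, opp; simpl. field; auto.
Qed.

Lemma is_RInt_C_pair (f : R -> C) (a b l1 l2 : R) :
  is_RInt (fun t => fst (f t)) a b l1 -> is_RInt (fun t => snd (f t)) a b l2 ->
  is_RInt (V := C_R_NormedModule) f a b (l1, l2).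
Proof. apply (is_RInt_fct_extend_pair (U := R_NormedModule) (V := R_NormedModule)). Qed.

Lemma is_RInt_eit_mult (s : Z) :
  is_RInt (V := C_R_NormedModule) (fun t => eit (IZR s * t)) 0 (2 * PI)
    ((if Z.eq_dec s 0 then 2 * PI else 0)%R, 0%R).
Proof.
  destruct (Z.eq_dec s 0) as [->|Hs]; apply is_RInt_C_pair; unfold eit; simpl.
  - assert (Hc := is_RInt_const 0 (2 * PI) (1%R : R_NormedModule)).
    replace (scal (2 * PI - 0)%R (1%R : R_NormedModule)) with (2 * PI)%R in Hc
      by (unfold scal; simpl; unfold mult; simpl; ring).
    eapply is_RInt_ext; [|apply Hc]. intros x _. rewrite Rmult_0_l, cos_0. reflexivity.
  - assert (Hc := is_RInt_const 0 (2 * PI) (0%R : R_NormedModule)).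
    replace (scal (2 * PI - 0)%R (0%R : R_NormedModule)) with 0%R in Hc
      by (unfold scal; simpl; unfold mult; simpl; ring).
    eapply is_RInt_ext; [|apply Hc]. intros x _. rewrite Rmult_0_l, sin_0. reflexivity.
  - apply is_RInt_cos_mult, Hs.
  - apply is_RInt_sin_mult, Hs.
Qed.

Lemma is_RInt_lin_comb (g h : R -> R) (a b al be Ig Ih : R) :
  is_RInt g a b Ig -> is_RInt h a b Ih ->
  is_RInt (fun t => al * g t + be * h t)%R a b (al * Ig + be * Ih)%R.
Proof.
  intros H1 H2.
  apply (is_RInt_plus (V := R_NormedModule)); apply (is_RInt_scal (V := R_NormedModule)); auto.
Qed.

Lemma is_RInt_Cmult (c : C) (f : R -> C) (a b : R) (l : C) :
  is_RInt (V := C_R_NormedModule) f a b l ->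
  is_RInt (V := C_R_NormedModule) (fun t => c * f t) a b (c * l).
Proof.
  intros H. destruct c as [c1 c2], l as [l1 l2].
  assert (H1 := is_RInt_fct_extend_fst (U := R_NormedModule) (V := R_NormedModule) f a b _ H).
  assert (H2 := is_RInt_fct_extend_snd (U := R_NormedModule) (V := R_NormedModule) f a b _ H).
  simpl in H1, H2.
  change ((c1, c2) * (l1, l2)) with ((c1 * l1 - c2 * l2)%R, (c1 * l2 + c2 * l1)%R).
  apply is_RInt_C_pair.
  - replace (c1 * l1 - c2 * l2)%R with (c1 * l1 + (- c2) * l2)%R by ring.
    eapply is_RInt_ext; [|apply (is_RInt_lin_comb _ _ _ _ _ _ _ _ H1 H2)].
    intros x _. simpl. ring.
  - eapply is_RInt_ext; [|apply (is_RInt_lin_comb _ _ _ _ _ _ _ _ H2 H1)].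
    intros x _. simpl. ring.
Qed.

Lemma is_RInt_csum (F : nat -> R -> C) (I : nat -> C) (a b : R) (J : nat) :
  (forall k, (k < J)%nat -> is_RInt (V := C_R_NormedModule) (F k) a b (I k)) ->
  is_RInt (V := C_R_NormedModule) (fun t => csum (fun k => F k t) J) a b (csum I J).
Proof.
  induction J; intros H; simpl.
  - assert (Hc := is_RInt_const (V := C_R_NormedModule) a b (RtoC 0)).
    replace (scal (b - a)%R (RtoC 0 : C_R_NormedModule)) with (RtoC 0) in Hc; auto.
    apply injective_projections;
      unfold scal; simpl; unfold prod_scal, scal; simpl; unfold mult; simpl; ring.
  - apply (is_RInt_plus (V := C_R_NormedModule)).
    + apply IHJ; intros; apply H; lia.
    + apply H; lia.
Qed.

Lemma twopii_neq0 : twopii <> 0.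
Proof. unfold twopii. intro H. apply (f_equal snd) in H. simpl in H. pose proof PI_RGT_0. nra. Qed.

(* Orthogonality: only the mode with total exponent 0 survives. *)
Lemma is_RInt_eval_seq (X : Seq) (J : nat) (σ n e : Z) (k0 : nat) :
  supported X J ->
  (forall k : nat, (σ * (n + Z.of_nat k) + e + 1)%Z = 0%Z <-> k = k0) ->
  is_RInt (V := C_R_NormedModule)
    (fun t => eval_seq σ X J n t * zpow (eit t) e * (Ci * eit t)) 0 (2 * PI) (twopii * X k0).
Proof.
  intros Hs Hk.
  set (s := fun k : nat => (σ * (n + Z.of_nat k) + e + 1)%Z).
  replace (twopii * X k0) with
    (csum (fun k => (X k * Ci) * ((if Z.eq_dec (s k) 0 then 2 * PI else 0)%R, 0%R)) J).
  - eapply is_RInt_ext.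
    2: apply (is_RInt_csum (fun k t => (X k * Ci) * eit (IZR (s k) * t))).
    + intros t _. unfold eval_seq. symmetry.
      rewrite <- Cmult_assoc, Cmult_comm, <- csum_scal. apply csum_ext. intros k _.
      unfold fmode, s. rewrite zpow_eit, !plus_IZR.
      rewrite !Rmult_plus_distr_r, Rmult_1_l, <- !eit_add. ring.
    + intros k _. apply is_RInt_Cmult, is_RInt_eit_mult.
  - rewrite (csum_ext _ (fun k => if Nat.eq_dec k k0 then twopii * X k else 0)).
    + rewrite csum_delta. destruct (Nat.ltb_spec k0 J); auto. rewrite Hs; auto. ring.
    + intros k _. destruct (Nat.eq_dec k k0) as [E1|E1], (Z.eq_dec (s k) 0) as [E2|E2].
      * subst. unfold twopii. apply injective_projections; simpl; ring.
      * exfalso. apply E2, Hk, E1.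
      * exfalso. apply E1, Hk, E2.
      * apply injective_projections; simpl; ring.
Qed.

Lemma is_RInt_uniform_limit (f : nat -> R -> C) (g : R -> C) (a b : R) (I : nat -> C) (L : C) :
  (forall eps, (0 < eps)%R ->
     exists M, forall m t, (M <= m)%nat -> (Cmod (f m t - g t) <= eps)%R) ->
  (forall m, is_RInt (V := C_R_CompleteNormedModule) (f m) a b (I m)) -> cv_nat I L ->
  is_RInt (V := C_R_CompleteNormedModule) g a b L.
Proof.
  intros Hu Hf HI.
  assert (Hfl : filterlim f eventually
      (locally (T := fct_UniformSpace R C_R_CompleteNormedModule) g)).
  { intros P [eps HP]. destruct (Hu (eps / 2)%R) as [M HM]. { destruct eps; simpl; lra. }
    exists M. intros m Hm. apply HP. intros t. apply ball_C_of_Cmod.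
    eapply Rle_lt_trans. apply HM, Hm. destruct eps; simpl; lra. }
  destruct (filterlim_RInt (V := C_R_CompleteNormedModule)
              f a b eventually eventually_filter g I Hf Hfl)
    as [If [HIf HgIf]].
  replace L with If; auto. apply (cv_nat_unique I); auto. apply cv_nat_of_filterlim, HIf.
Qed.

Lemma Qstep_cv (q r : Z -> C) (n : Z) (z : C) (u : nat -> vec2) (w : vec2) :
  cv_nat (fun m => fst (u m)) (fst w) -> cv_nat (fun m => snd (u m)) (snd w) ->
  forall i, cv_nat (fun m => coord i (Qstep q r n z (u m))) (coord i (Qstep q r n z w)).
Proof.
  intros H1 H2 [|]; unfold Qstep, comp1, comp2; simpl;
    apply cv_nat_plus; apply cv_nat_scal; auto.
Qed.

(** * Limits of the backward iterates *)

Section JostLimit.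

Variables (σ : Z) (St : Z -> Seq2 -> Seq2) (b : Seq2) (G : Z -> R).
Hypothesis HC : contracting St b G.

Definition partial_eval (m : nat) (n : Z) (t : R) : vec2 :=
  eval2 σ (iter_back St b m n) (2 * m + 1) n t.

Definition jost_limit (n : Z) (t : R) : vec2 :=
  (lim_nat (fun m => fst (partial_eval m n t)), lim_nat (fun m => snd (partial_eval m n t))).

Definition coef_limit (n : Z) (k : nat) : vec2 :=
  (lim_nat (fun m => fst (iter_back St b m n) k), lim_nat (fun m => snd (iter_back St b m n) k)).

Lemma partial_eval_cauchy (n : Z) (eps : R) : (0 < eps)%R ->
  exists M, forall m p t i, (M <= m)%nat ->
    (Cmod (coord i (partial_eval (m + p) n t) - coord i (partial_eval m n t)) <= eps)%R.
Proof.
  intros He. destruct (iter_cauchy St b G HC n eps He) as [M HM].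
  exists M. intros m p t i Hm. eapply Rle_trans; [|apply (HM m p (2 * (m + p) + 1)%nat Hm)].
  apply eval2_dist; [apply (iter_support St b G HC)|lia].
Qed.

Lemma coord_jost_limit (i : bool) (n : Z) (t : R) :
  coord i (jost_limit n t) = lim_nat (fun m => coord i (partial_eval m n t)).
Proof. destruct i; reflexivity. Qed.

Lemma jost_cv (n : Z) (t : R) (i : bool) :
  cv_nat (fun m => coord i (partial_eval m n t)) (coord i (jost_limit n t)).
Proof.
  rewrite coord_jost_limit. apply cv_nat_cauchy. intros eps He.
  destruct (partial_eval_cauchy n eps He) as [M HM]. exists M. intros; apply HM; auto.
Qed.

Lemma jost_uniform (n : Z) (eps : R) : (0 < eps)%R ->
  exists M, forall m t i, (M <= m)%nat ->
    (Cmod (coord i (partial_eval m n t) - coord i (jost_limit n t)) <= eps)%R.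
Proof.
  intros He. destruct (partial_eval_cauchy n eps He) as [M HM].
  exists M. intros m t i Hm. rewrite coord_jost_limit.
  apply (cv_nat_cauchy_rate (fun m => coord i (partial_eval m n t)) eps M); auto.
  rewrite <- coord_jost_limit. apply jost_cv.
Qed.

Lemma coef_cv (n : Z) (k : nat) (i : bool) :
  cv_nat (fun m => coord i (iter_back St b m n) k) (coord i (coef_limit n k)).
Proof.
  replace (coord i (coef_limit n k)) with (lim_nat (fun m => coord i (iter_back St b m n) k))
    by (destruct i; reflexivity).
  apply cv_nat_cauchy. intros eps He. destruct (iter_cauchy St b G HC n eps He) as [M HM].
  exists M. intros m p Hm. eapply Rle_trans; [apply (Cmod_le_dist1 (S k))|]; [lia|].
  eapply Rle_trans; [apply coord_dist|apply HM, Hm].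
Qed.

Lemma jost_near_base (eps : R) : (0 < eps)%R ->
  exists N, forall n t i, (N <= n)%Z ->
    (Cmod (coord i (jost_limit n t) - coord i (eval2 σ b 1 n t)) <= eps)%R.
Proof.
  intros He. destruct (iter_near_base St b G HC eps He) as [N HN].
  exists N. intros n t i Hn. apply (cv_nat_le _ _ _ _ O (jost_cv n t i)). intros m _.
  eapply Rle_trans; [apply eval2_dist|apply HN, Hn]; [apply (contr_base_support _ _ _ HC)|lia].
Qed.

Lemma coef_near_base (eps : R) : (0 < eps)%R ->
  exists N, forall n k i, (N <= n)%Z ->
    (Cmod (coord i (coef_limit n k) - coord i b k) <= eps)%R.
Proof.
  intros He. destruct (iter_near_base St b G HC eps He) as [N HN].
  exists N. intros n k i Hn. apply (cv_nat_le _ _ _ _ O (coef_cv n k i)). intros m _.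
  eapply Rle_trans; [apply (Cmod_le_dist1 (S k))|]; [lia|].
  eapply Rle_trans; [apply coord_dist|apply HN, Hn].
Qed.

(* Interchanging [m -> oo] and [K -> oo] is justified by the l^1 Cauchy bound, uniform in [K]. *)
Lemma coef_series (n : Z) (i : bool) :
  cv_nat (csum (fun k => coord i (coef_limit n k))) (coord i (jost_limit n 0)).
Proof.
  set (X := fun m => coord i (iter_back St b m n)).
  assert (HX : forall m, csum (X m) (2 * m + 1) = coord i (partial_eval m n 0))
    by (intros; unfold partial_eval; rewrite coord_eval2, eval_seq_at_0; reflexivity).
  assert (Hsupp : forall m, supported (X m) (2 * m + 1))
    by (intros; apply coord_supported, (iter_support St b G HC)).
  assert (Hd : forall m m' J,
      (Cmod (csum (X m') J - csum (X m) J) <= dist2 J (iter_back St b m' n) (iter_back St b m n))%R)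
    by (intros; eapply Rle_trans; [apply csum_dist1|apply coord_dist]).
  intros eps He. destruct (iter_cauchy St b G HC n (eps / 3)) as [M HM]; [lra|].
  exists (2 * M + 1)%nat. intros K HK.
  assert (Hw : cv_nat (fun m => csum (X m) K - coord i (partial_eval m n 0))
                 (csum (fun k => coord i (coef_limit n k)) K - coord i (jost_limit n 0))).
  { apply cv_nat_minus; [apply cv_nat_csum; intros; apply coef_cv|apply jost_cv]. }
  assert (Hb : forall m, (M <= m)%nat ->
            (Cmod (csum (X m) K - coord i (partial_eval m n 0) - 0) <= 2 * (eps / 3))%R).
  { intros m Hm. rewrite <- !HX.
    replace (csum (X m) K - csum (X m) (2 * m + 1) - 0) with
      ((csum (X m) K - csum (X M) K) - (csum (X m) (2 * m + 1) - csum (X M) (2 * m + 1)))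
      by (rewrite (csum_trailing_zeros (X M) (2 * M + 1) K),
          (csum_trailing_zeros (X M) (2 * M + 1) (2 * m + 1))
            by (try apply Hsupp; lia); ring).
    replace m with (M + (m - M))%nat by lia.
    eapply Rle_trans; [apply Cmod_triangle|]. rewrite Cmod_opp.
    pose proof (Rle_trans _ _ _ (Hd M (M + (m - M))%nat K) (HM M (m - M)%nat K (le_n M))).
    pose proof (Rle_trans _ _ _ (Hd M (M + (m - M))%nat (2 * (M + (m - M)) + 1)%nat)
                  (HM M (m - M)%nat _ (le_n M))).
    lra. }
  pose proof (cv_nat_le _ _ 0 _ M Hw Hb) as H.
  replace (csum _ K - _ - 0) with (csum (fun k => coord i (coef_limit n k)) K
      - coord i (jost_limit n 0))
    in H by ring. lra.
Qed.

Lemma fourier_coef_limit (psi : Z -> C -> vec2) (n e : Z) (k0 : nat) (i : bool) :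
  (forall t, psi n (eit t) = jost_limit n t) ->
  (forall k : nat, (σ * (n + Z.of_nat k) + e + 1)%Z = 0%Z <-> k = k0) ->
  / twopii * circ_int (fun z => coord i (psi n z) * zpow z e) = coord i (coef_limit n k0).
Proof.
  intros Hpsi Hk. unfold circ_int.
  rewrite (RInt_ext (V := C_R_CompleteNormedModule) _
      (fun t => coord i (jost_limit n t) * zpow (eit t) e * (Ci * eit t)))
    by (intros; rewrite Hpsi; reflexivity).
  rewrite (is_RInt_unique (V := C_R_CompleteNormedModule) _ _ _
      (twopii * coord i (coef_limit n k0))).
  { field. apply twopii_neq0. }
  apply (is_RInt_uniform_limit
      (fun m t => coord i (partial_eval m n t) * zpow (eit t) e * (Ci * eit t))
           _ _ _ (fun m => twopii * coord i (iter_back St b m n) k0)).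
  - intros eps He. destruct (jost_uniform n eps He) as [M HM]. exists M. intros m t Hm.
    replace (_ - _) with ((coord i (partial_eval m n t) - coord i (jost_limit n t))
        * (zpow (eit t) e * (Ci * eit t)))
      by ring.
    rewrite !Cmod_mult, zpow_eit, Cmod_Ci, !Cmod_eit, !Rmult_1_r. apply HM, Hm.
  - intros m. eapply is_RInt_ext; [|apply (is_RInt_eval_seq _ (2 * m + 1)); auto].
    + intros t _. unfold partial_eval. rewrite coord_eval2. reflexivity.
    + apply coord_supported, (iter_support St b G HC).
  - apply cv_nat_scal, coef_cv.
Qed.

Variables (q r : Z -> C).
Hypothesis step_eval : forall v L n t, supported2 v L ->
  eval2 σ (St n v) (S (S L)) n t = Qstep q r n (eit t) (eval2 σ v L (n + 1) t).

Lemma partial_eval_succ (m : nat) (n : Z) (t : R) :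
  partial_eval (S m) n t = Qstep q r n (eit t) (partial_eval m (n + 1) t).
Proof.
  unfold partial_eval. cbn [iter_back]. replace (2 * S m + 1)%nat with (S (S (2 * m + 1))) by lia.
  apply step_eval, (iter_support St b G HC).
Qed.

Lemma jost_step (n : Z) (t : R) : jost_limit n t = Qstep q r n (eit t) (jost_limit (n + 1) t).
Proof.
  apply vec2_eq_coord. intros i. apply (cv_nat_unique (fun m => coord i (partial_eval (S m) n t))).
  - apply (cv_nat_shift (fun m => coord i (partial_eval m n t))), jost_cv.
  - eapply cv_nat_ext; [intros m; rewrite partial_eval_succ; reflexivity|].
    apply Qstep_cv; [apply (jost_cv (n + 1) t true)|apply (jost_cv (n + 1) t false)].
Qed.

End JostLimit.

(** * The recursion (Q) on Fourier coefficients *)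

(* One backward step of (Q) on Fourier coefficients: if [v] lists the coefficients of [w]
   and [x], [y] realise multiplication by [z] and [1/z], then [Qcoef x y q r n v] lists those
   of [T_n(z) w]. *)
Definition Qcoef (x y : Seq -> Seq) (q r : Z -> C) (n : Z) (v : Seq2) : Seq2 :=
  let A := fun k => x (fst v) k + q n * (x (snd v) k - y (snd v) k) in
  (A, fun k => y (snd v) k + r n * A k).

Definition Gqr (q r : Z -> C) (k : Z) : R := ((1 + 2 * Cmod (q k)) * (1 + Cmod (r k)))%R.

Lemma Gqr_ge1 (q r : Z -> C) (k : Z) : (1 <= Gqr q r k)%R.
Proof. unfold Gqr. pose proof (Cmod_ge_0 (q k)); pose proof (Cmod_ge_0 (r k)). nra. Qed.

Section Qcoef.

Variables (x y : Seq -> Seq) (q r : Z -> C).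

Lemma Qcoef_lipschitz (n : Z) (J : nat) (u v : Seq2) :
  (forall X Y, (dist1 J (x X) (x Y) <= dist1 J X Y)%R) ->
  (forall X Y, (dist1 J (y X) (y Y) <= dist1 J X Y)%R) ->
  (dist2 J (Qcoef x y q r n u) (Qcoef x y q r n v) <= Gqr q r n * dist2 J u v)%R.
Proof.
  intros Hx Hy. unfold dist2, Qcoef, Gqr; simpl.
  pose proof (dist1_nonneg J (fst u) (fst v)) as HA0.
  pose proof (dist1_nonneg J (snd u) (snd v)) as HB0.
  pose proof (Cmod_ge_0 (q n)) as Hq. pose proof (Cmod_ge_0 (r n)) as Hr.
  pose proof (Hx (fst u) (fst v)) as Hx1. pose proof (Hx (snd u) (snd v)) as Hx2.
  pose proof (Hy (snd u) (snd v)) as Hy2.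
  pose proof (dist1_minus J (x (snd u)) (y (snd u)) (x (snd v)) (y (snd v))) as Hm.
  set (dA := dist1 J (fst u) (fst v)) in *. set (dB := dist1 J (snd u) (snd v)) in *.
  set (Au := fun k => x (fst u) k + q n * (x (snd u) k - y (snd u) k)).
  set (Av := fun k => x (fst v) k + q n * (x (snd v) k - y (snd v) k)).
  assert (HA : (dist1 J Au Av <= dA + 2 * Cmod (q n) * dB)%R)
    by (eapply Rle_trans; [apply dist1_plus_scal|]; nra).
  assert (HB : (dist1 J (fun k => (y (snd u) k + r n * Au k)%C)
      (fun k => (y (snd v) k + r n * Av k)%C)
                <= dB + Cmod (r n) * (dA + 2 * Cmod (q n) * dB))%R)
    by (eapply Rle_trans; [apply dist1_plus_scal|]; nra).
  unfold Au, Av in HB.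
  assert (0 <= Cmod (q n) * Cmod (r n) * dA)%R by (repeat apply Rmult_le_pos; lra).
  assert (0 <= Cmod (q n) * dA)%R by (apply Rmult_le_pos; lra).
  assert (0 <= Cmod (r n) * dB)%R by (apply Rmult_le_pos; lra).
  nra.
Qed.

Lemma Qcoef_support (n : Z) (v : Seq2) (L : nat) :
  (forall X, supported X L -> supported (x X) (S (S L))) ->
  (forall X, supported X L -> supported (y X) (S (S L))) ->
  supported2 v L -> supported2 (Qcoef x y q r n v) (S (S L)).
Proof.
  intros Hx Hy [H1 H2]. unfold Qcoef. split; intros k Hk; simpl.
  - rewrite (Hx _ H1), (Hx _ H2), (Hy _ H2) by auto. ring.
  - rewrite (Hx _ H1), (Hx _ H2), !(Hy _ H2) by auto. ring.
Qed.

Lemma Qcoef_eval (σ n : Z) (t : R) (z : C) (v : Seq2) (L : nat) :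
  (forall X, supported X L -> eval_seq σ (x X) (S (S L)) n t = z * eval_seq σ X L (n + 1) t) ->
  (forall X, supported X L -> eval_seq σ (y X) (S (S L)) n t = / z * eval_seq σ X L (n + 1) t) ->
  supported2 v L ->
  eval2 σ (Qcoef x y q r n v) (S (S L)) n t = Qstep q r n z (eval2 σ v L (n + 1) t).
Proof.
  intros Hx Hy [H1 H2]. unfold eval2, Qcoef, Qstep, comp1, comp2; simpl.
  rewrite !eval_seq_plus_scal, eval_seq_minus, (Hx _ H1), (Hx _ H2), (Hy _ H2).
  f_equal; ring.
Qed.

End Qcoef.

Definition step_psi (q r : Z -> C) : Z -> Seq2 -> Seq2 := Qcoef shift2 (fun X => X) q r.
Definition step_bar (q r : Z -> C) : Z -> Seq2 -> Seq2 := Qcoef (fun X => X) shift2 q r.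
Definition base_psi : Seq2 := (zseq, delta0).
Definition base_bar : Seq2 := (delta0, zseq).

Lemma rapid_decay_quadratic (a : Z -> C) : rapid_decay a ->
  exists N, (1 <= N)%Z /\ forall n, (N <= n)%Z -> (Cmod (a n) <= / IZR n ^ 2)%R.
Proof.
  intros H. destruct (H 2%nat 1%R Rlt_0_1) as [N HN]. exists (Z.max N 1). split; [lia|].
  intros n Hn. specialize (HN n ltac:(lia)). rewrite Z.abs_eq in HN by lia.
  assert (0 < IZR n ^ 2)%R by (apply pow_lt, IZR_lt; lia).
  apply (Rmult_le_reg_l (IZR n ^ 2)); auto. rewrite Rinv_r by lra. lra.
Qed.

Lemma Gqr_quadratic_excess (q r : Z -> C) :
  rapid_decay q -> rapid_decay r -> quadratic_excess (Gqr q r).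
Proof.
  intros Hq Hr. destruct (rapid_decay_quadratic q Hq) as [Nq [_ Hq']].
  destruct (rapid_decay_quadratic r Hr) as [Nr [_ Hr']].
  exists 5%R, (Z.max 2 (Z.max Nq Nr)). split; [lra|split; [lia|]]. intros k Hk.
  specialize (Hq' k ltac:(lia)). specialize (Hr' k ltac:(lia)).
  assert (2 <= IZR k)%R by (apply IZR_le; lia).
  assert (Hu : (/ IZR k ^ 2 <= 1)%R).
  { apply (Rmult_le_reg_l (IZR k ^ 2)); [nra|]. rewrite Rinv_r by nra. nra. }
  pose proof (Cmod_ge_0 (q k)); pose proof (Cmod_ge_0 (r k)).
  unfold Gqr, Rdiv. set (u := (/ IZR k ^ 2)%R) in *.
  assert (Cmod (q k) * Cmod (r k) <= u)%R by nra. nra.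
Qed.

Section Instances.

Variables q r : Z -> C.
Hypotheses (hq : rapid_decay q) (hr : rapid_decay r).

Lemma contracting_psi : contracting (step_psi q r) base_psi (Gqr q r).
Proof.
  split.
  - apply Gqr_ge1.
  - apply Gqr_quadratic_excess; auto.
  - intros n J u v. apply Qcoef_lipschitz; [apply dist1_shift2_le|intros; apply Rle_refl].
  - intros n J. unfold dist2, dist1, step_psi, Qcoef, base_psi, zseq; simpl.
    match goal with |- (tnorm J ?f + tnorm J ?g <= _)%R =>
      rewrite (tnorm_ext J f (fun k => q n * (shift2 delta0 k - delta0 k))),
        (tnorm_ext J g (fun k => r n * (q n * (shift2 delta0 k - delta0 k))))
        by (intros [|[|k]]; simpl; ring) end.
    rewrite !tnorm_scal. fold (dist1 J (shift2 delta0) delta0).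
    pose proof (dist1_le_tnorm J (shift2 delta0) delta0).
    pose proof (tnorm_shift2_le J delta0). pose proof (tnorm_delta0_le J).
    pose proof (Cmod_ge_0 (q n)). pose proof (Cmod_ge_0 (r n)).
    set (d := dist1 J (shift2 delta0) delta0) in *.
    assert (Hqd : (Cmod (q n) * d <= Cmod (q n) * 2)%R) by (apply Rmult_le_compat_l; lra).
    assert (Cmod (r n) * (Cmod (q n) * d) <= Cmod (r n) * (Cmod (q n) * 2))%R
      by (apply Rmult_le_compat_l; lra).
    unfold Gqr. nra.
  - intros n v L.
    apply Qcoef_support; [intros X; apply supported_shift2|intros X; apply supported_mono; lia].
  - split; intros [|k] Hk; simpl; auto; lia.
Qed.

Lemma contracting_bar : contracting (step_bar q r) base_bar (Gqr q r).
Proof.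
  split.
  - apply Gqr_ge1.
  - apply Gqr_quadratic_excess; auto.
  - intros n J u v. apply Qcoef_lipschitz; [intros; apply Rle_refl|apply dist1_shift2_le].
  - intros n J. unfold dist2, dist1, step_bar, Qcoef, base_bar, zseq; simpl.
    match goal with |- (tnorm J ?f + tnorm J ?g <= _)%R =>
      rewrite (tnorm_ext J f zseq), (tnorm_ext J g (fun k => r n * delta0 k))
        by (intros [|[|k]]; unfold zseq; simpl; ring) end.
    rewrite tnorm_zseq, tnorm_scal. pose proof (tnorm_delta0_le J).
    pose proof (Cmod_ge_0 (q n)). pose proof (Cmod_ge_0 (r n)). unfold Gqr. nra.
  - intros n v L.
    apply Qcoef_support; [intros X; apply supported_mono; lia|intros X; apply supported_shift2].
  - split; intros [|k] Hk; simpl; auto; lia.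
Qed.

Lemma step_psi_eval (v : Seq2) (L : nat) (n : Z) (t : R) : supported2 v L ->
  eval2 1 (step_psi q r n v) (S (S L)) n t = Qstep q r n (eit t) (eval2 1 v L (n + 1) t).
Proof.
  apply Qcoef_eval; intros X HX.
  - rewrite eval_seq_shift2, fmode_1. reflexivity.
  - rewrite eval_seq_pad, fmode_1 by auto. reflexivity.
Qed.

Lemma step_bar_eval (v : Seq2) (L : nat) (n : Z) (t : R) : supported2 v L ->
  eval2 (-1) (step_bar q r n v) (S (S L)) n t = Qstep q r n (eit t) (eval2 (-1) v L (n + 1) t).
Proof.
  assert (Hm : fmode t (-1) = / eit t) by (rewrite <- fmode_1, <- fmode_opp; reflexivity).
  apply Qcoef_eval; intros X HX.
  - rewrite eval_seq_pad, Hm by auto. f_equal. field. apply eit_neq0.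
  - rewrite eval_seq_shift2, Hm. reflexivity.
Qed.

End Instances.

(** * Identification of the Jost solutions and the Marchenko kernel *)

Definition Wr (u v : vec2) : C := comp1 u * comp2 v - comp2 u * comp1 v.

Lemma Wr_Qstep (q r : Z -> C) (n : Z) (z : C) (u v : vec2) :
  z <> 0 -> Wr (Qstep q r n z u) (Qstep q r n z v) = Wr u v.
Proof. intros Hz. unfold Wr, Qstep, comp1, comp2; simpl. field; auto. Qed.

Lemma Wr_expand (u v x : vec2) :
  Wr u v * comp1 x = Wr x v * comp1 u + Wr u x * comp1 v /\
  Wr u v * comp2 x = Wr x v * comp2 u + Wr u x * comp2 v.
Proof. unfold Wr, comp1, comp2. split; ring. Qed.

Definition renorm (t : R) (n : Z) (u : vec2) : vec2 :=
  (fmode t n * comp1 u, fmode t (- n) * comp2 u).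

Lemma Wr_renorm (t : R) (n : Z) (u v : vec2) : Wr (renorm t n u) (renorm t n v) = Wr u v.
Proof.
  unfold Wr, renorm, comp1, comp2; simpl. rewrite fmode_opp.
  field. apply fmode_neq0.
Qed.

Definition cv_vec (u : Z -> vec2) (U : vec2) : Prop :=
  cv_pinf (fun n => comp1 (u n)) (comp1 U) /\ cv_pinf (fun n => comp2 (u n)) (comp2 U).

Lemma Wr_cv (u v : Z -> vec2) (U W : vec2) :
  cv_vec u U -> cv_vec v W -> cv_pinf (fun n => Wr (u n) (v n)) (Wr U W).
Proof.
  intros [Hu1 Hu2] [Hv1 Hv2]. unfold Wr.
  apply (cv_ext (fun n => comp1 (u n) * comp2 (v n) + - (comp2 (u n) * comp1 (v n)))).
  { intros; ring. }
  apply cv_plus; [|apply cv_opp]; apply cv_mult; auto.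
Qed.

Lemma Wr_solutions_const (q r : Z -> C) (z : C) (u v : Z -> vec2) (L : C) :
  z <> 0 -> solves_Q q r z u -> solves_Q q r z v -> cv_pinf (fun n => Wr (u n) (v n)) L ->
  forall n, Wr (u n) (v n) = L.
Proof.
  intros Hz Hu Hv. apply cv_const_eq. intros n. rewrite (Hu n), (Hv n). apply Wr_Qstep, Hz.
Qed.

(* Two solutions with renormalised limits [(0,1)] and [(1,0)] have Wronskian [-1], so
   they form a basis; the coordinates of a third solution are read off its Wronskians. *)
Lemma solution_decomp (q r : Z -> C) (t : R) (P B u : Z -> vec2) (U : vec2) :
  solves_Q q r (eit t) P -> solves_Q q r (eit t) B -> solves_Q q r (eit t) u ->
  cv_vec (fun n => renorm t n (P n)) (RtoC 0, RtoC 1) ->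
  cv_vec (fun n => renorm t n (B n)) (RtoC 1, RtoC 0) ->
  cv_vec (fun n => renorm t n (u n)) U ->
  forall n, u n = (comp2 U * comp1 (P n) + comp1 U * comp1 (B n),
      comp2 U * comp2 (P n) + comp1 U * comp2 (B n)).
Proof.
  intros SP SB Su HP HB Hu n.
  assert (Hlim : forall (v w : Z -> vec2) V W, solves_Q q r (eit t) v -> solves_Q q r (eit t) w ->
            cv_vec (fun n => renorm t n (v n)) V -> cv_vec (fun n => renorm t n (w n)) W ->
            Wr (v n) (w n) = Wr V W).
  { intros v w V W Sv Sw Hv Hw. apply (Wr_solutions_const q r (eit t)); auto. apply eit_neq0.
    eapply cv_ext; [|apply (Wr_cv _ _ _ _ Hv Hw)]. intros; apply Wr_renorm. }
  pose proof (Hlim _ _ _ _ SP SB HP HB) as WPB. pose proof (Hlim _ _ _ _ Su SB Hu HB) as WuB.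
  pose proof (Hlim _ _ _ _ SP Su HP Hu) as WPu.
  destruct (Wr_expand (P n) (B n) (u n)) as [E1 E2].
  rewrite WPB, WuB, WPu in E1, E2. unfold Wr, comp1, comp2 in *; simpl in *.
  apply injective_projections; simpl.
  - replace (fst (u n)) with (- ((0 * 0 - 1 * 1) * fst (u n))) by ring. rewrite E1. ring.
  - replace (snd (u n)) with (- ((0 * 0 - 1 * 1) * snd (u n))) by ring. rewrite E2. ring.
Qed.

Lemma cv_vec_renorm (t : R) (u V : Z -> vec2) (U : vec2) :
  (forall eps, (0 < eps)%R ->
     exists N, forall n i, (N <= n)%Z -> (Cmod (coord i (u n) - coord i (V n)) <= eps)%R) ->
  (forall n, renorm t n (V n) = U) -> cv_vec (fun n => renorm t n (u n)) U.
Proof.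
  intros Hnear HV.
  split; apply cv_of_eventual_bound; intros eps He; destruct (Hnear eps He) as [N HN];
    exists N; intros n Hn; rewrite <- (HV n); unfold renorm, comp1, comp2; simpl.
  - replace (_ - _) with (fmode t n * (fst (u n) - fst (V n))) by ring.
    rewrite Cmod_mult, Cmod_fmode, Rmult_1_l. apply (HN n true Hn).
  - replace (_ - _) with (fmode t (- n) * (snd (u n) - snd (V n))) by ring.
    rewrite Cmod_mult, Cmod_fmode, Rmult_1_l. apply (HN n false Hn).
Qed.

Definition psi_sol (q r : Z -> C) : Z -> R -> vec2 := jost_limit 1 (step_psi q r) base_psi.
Definition bar_sol (q r : Z -> C) : Z -> R -> vec2 := jost_limit (-1) (step_bar q r) base_bar.
Definition psi_coef (q r : Z -> C) : Z -> nat -> vec2 := coef_limit (step_psi q r) base_psi.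
Definition bar_coef (q r : Z -> C) : Z -> nat -> vec2 := coef_limit (step_bar q r) base_bar.

Lemma renorm_at_0 (n : Z) (u : vec2) : renorm 0 n u = u.
Proof. unfold renorm. rewrite !fmode_at_0, !Cmult_1_l. destruct u; reflexivity. Qed.

Lemma Qstep_at_1 (q r : Z -> C) (n : Z) (w : vec2) :
  Qstep q r n (eit 0) w = (comp1 w, r n * comp1 w + comp2 w).
Proof.
  rewrite eit_0. unfold Qstep, comp1, comp2. apply injective_projections; simpl; field.
  all: apply C1_neq_C0.
Qed.

Lemma is_series_inv2_apply (c1 c2 V : vec2) (v : nat -> vec2) (i : bool) :
  (forall j, cv_nat (csum (fun k => coord j (v k))) (coord j V)) ->
  is_series (K := R_AbsRing) (V := C_R_NormedModule)
    (fun k => coord i (inv2_apply c1 c2 (v k))) (coord i (inv2_apply c1 c2 V)).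
Proof.
  intros H. apply is_series_of_cv_nat. pose proof (H true) as H1. pose proof (H false) as H2.
  destruct i; unfold inv2_apply, comp1, comp2; cbn in *.
  - eapply cv_nat_ext; [|apply cv_nat_scal, cv_nat_minus; apply cv_nat_scal; [apply H1|apply H2]].
    intros m; cbv beta. rewrite <- !csum_scal, <- csum_minus, <- csum_scal.
    apply csum_ext; intros; ring.
  - eapply cv_nat_ext; [|apply cv_nat_scal, cv_nat_plus; apply cv_nat_scal; [apply H1|apply H2]].
    intros m; cbv beta. rewrite <- !csum_scal, <- csum_plus, <- csum_scal.
    apply csum_ext; intros; ring.
Qed.

(* With [Kbar_nn = (a, r a)] and [K_nn = (-q B, (1 - q r) B)] the determinant is [a B]. *)
Lemma inv2_apply_q_identity (q0 r0 a B1 D : C) : a <> 0 -> B1 <> 0 ->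
  let M := inv2_apply (a, r0 * a) (- q0 * B1, (1 - q0 * r0) * B1) in
  q0 = comp1 (M (RtoC 0, RtoC 1)) * comp2 (M (RtoC 0, RtoC 1)) /
       (comp1 (M (RtoC 1, D)) * comp2 (M (RtoC 0, RtoC 1)) - comp1 (M (RtoC 0, RtoC 1))
           * comp2 (M (RtoC 1, D))).
Proof.
  intros Ha HB M. unfold M, inv2_apply, comp1, comp2; cbn.
  replace (a * ((1 - q0 * r0) * B1) - - q0 * B1 * (r0 * a)) with (a * B1) by ring.
  field. repeat split; auto.
  match goal with |- ?e <> ?z => replace e with (a * B1) by ring; change z with (RtoC 0) end.
  apply Cmult_neq_0; auto.
Qed.

Lemma inv2_apply_ratio (q0 r0 a B1 D : C) : a <> 0 -> B1 <> 0 ->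
  let M := inv2_apply (a, r0 * a) (- q0 * B1, (1 - q0 * r0) * B1) in
  comp2 (M (RtoC 1, D)) / comp2 (M (RtoC 0, RtoC 1)) = D - r0.
Proof.
  intros Ha HB M. unfold M, inv2_apply, comp1, comp2; cbn.
  replace (a * ((1 - q0 * r0) * B1) - - q0 * B1 * (r0 * a)) with (a * B1) by ring.
  field. auto.
Qed.

Section JostSolutions.

Variables q r : Z -> C.
Hypotheses (hq : rapid_decay q) (hr : rapid_decay r).

Let HCpsi := contracting_psi q r hq hr.
Let HCbar := contracting_bar q r hq hr.

Lemma psi_sol_solves (t : R) : solves_Q q r (eit t) (fun n => psi_sol q r n t).
Proof. intros n. apply (jost_step 1 _ _ _ HCpsi q r (step_psi_eval q r)). Qed.

Lemma bar_sol_solves (t : R) : solves_Q q r (eit t) (fun n => bar_sol q r n t).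
Proof. intros n. apply (jost_step (-1) _ _ _ HCbar q r (step_bar_eval q r)). Qed.

Lemma psi_sol_renorm (t : R) : cv_vec (fun n => renorm t n (psi_sol q r n t)) (RtoC 0, RtoC 1).
Proof.
  apply (cv_vec_renorm t _ (fun n => eval2 1 base_psi 1 n t)).
  - intros eps He. destruct (jost_near_base 1 _ _ _ HCpsi eps He) as [N HN].
    exists N. intros n i Hn. apply HN, Hn.
  - intros n. unfold renorm, eval2, eval_seq, base_psi, zseq, delta0, comp1, comp2;
      cbn [csum fst snd].
    replace (1 * (n + Z.of_nat 0))%Z with n by lia.
    rewrite fmode_opp. apply injective_projections; simpl; field; apply fmode_neq0.
Qed.

Lemma bar_sol_renorm (t : R) : cv_vec (fun n => renorm t n (bar_sol q r n t)) (RtoC 1, RtoC 0).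
Proof.
  apply (cv_vec_renorm t _ (fun n => eval2 (-1) base_bar 1 n t)).
  - intros eps He. destruct (jost_near_base (-1) _ _ _ HCbar eps He) as [N HN].
    exists N. intros n i Hn. apply HN, Hn.
  - intros n. unfold renorm, eval2, eval_seq, base_bar, zseq, delta0, comp1, comp2;
      cbn [csum fst snd].
    replace (-1 * (n + Z.of_nat 0))%Z with (- n)%Z by lia.
    rewrite fmode_opp. apply injective_projections; simpl; field; apply fmode_neq0.
Qed.

Lemma solution_at_1 (u : Z -> vec2) (U : vec2) :
  solves_Q q r (eit 0) u -> cv_vec (fun n => renorm 0 n (u n)) U ->
  (forall n, comp1 (u n) = comp1 U) /\
  (forall n, comp2 (u n) = r n * comp1 U + comp2 (u (n + 1)%Z)).
Proof.
  intros Hu [H1 H2].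
  assert (Hstep : forall n,
      u n = (comp1 (u (n + 1)%Z), r n * comp1 (u (n + 1)%Z) + comp2 (u (n + 1)%Z)))
    by (intros n; rewrite (Hu n) at 1; apply Qstep_at_1).
  assert (Ha : forall n, comp1 (u n) = comp1 U).
  { apply cv_const_eq.
    - intros n. rewrite (Hstep n) at 1. reflexivity.
    - eapply cv_ext; [|apply H1]. intros n; cbv beta; rewrite renorm_at_0; reflexivity. }
  split; auto. intros n. rewrite (Hstep n) at 1. cbn. rewrite <- (Ha (n + 1)%Z). reflexivity.
Qed.

Lemma psi_sol_at_1 (n : Z) : psi_sol q r n 0 = (RtoC 0, RtoC 1).
Proof.
  destruct (solution_at_1 _ _ (psi_sol_solves 0) (psi_sol_renorm 0)) as [Ha Hb].
  apply injective_projections; [apply Ha|]. cbn.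
  apply (cv_const_eq (fun n => comp2 (psi_sol q r n 0))).
  - intros m. rewrite Hb. cbn. ring.
  - destruct (psi_sol_renorm 0) as [_ H2]. eapply cv_ext; [|apply H2].
    intros m; cbv beta; rewrite renorm_at_0; reflexivity.
Qed.

Lemma bar_sol_at_1 (n : Z) :
  comp1 (bar_sol q r n 0) = 1 /\ comp2 (bar_sol q r n 0) = r n + comp2 (bar_sol q r (n + 1) 0).
Proof.
  destruct (solution_at_1 _ _ (bar_sol_solves 0) (bar_sol_renorm 0)) as [Ha Hb].
  split; [apply Ha|]. rewrite Hb. cbn. ring.
Qed.

Lemma psi_coef_0 (n : Z) :
  psi_coef q r n 0 = (- q n * comp2 (psi_coef q r (n + 1) 0),
      (1 - q n * r n) * comp2 (psi_coef q r (n + 1) 0)).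
Proof.
  apply vec2_eq_coord. intros i.
  apply (cv_nat_unique (fun m => coord i (iter_back (step_psi q r) base_psi (S m) n) 0%nat)).
  - apply (cv_nat_shift (fun m => coord i (iter_back (step_psi q r) base_psi m n) 0%nat)),
      (coef_cv _ _ _ HCpsi).
  - destruct i; eapply cv_nat_ext; try apply cv_nat_scal, (coef_cv _ _ _ HCpsi (n + 1) 0 false);
      intros m; cbn; ring.
Qed.

Lemma bar_coef_0 (n : Z) :
  let a := comp1 (bar_coef q r (n + 1) 0) + q n * comp2 (bar_coef q r (n + 1) 0) in
  bar_coef q r n 0 = (a, r n * a).
Proof.
  intros a. apply vec2_eq_coord. intros i.
  apply (cv_nat_unique (fun m => coord i (iter_back (step_bar q r) base_bar (S m) n) 0%nat)).
  - apply (cv_nat_shift (fun m => coord i (iter_back (step_bar q r) base_bar m n) 0%nat)),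
      (coef_cv _ _ _ HCbar).
  - assert (Ha : cv_nat (fun m => fst (iter_back (step_bar q r) base_bar m (n + 1)) 0%nat
                     + q n * snd (iter_back (step_bar q r) base_bar m (n + 1)) 0%nat) a).
    { apply cv_nat_plus; [|apply cv_nat_scal]; [apply (coef_cv _ _ _ HCbar (n + 1) 0 true)
                                               |apply (coef_cv _ _ _ HCbar (n + 1) 0 false)]. }
    destruct i; [|apply (cv_nat_scal (r n)) in Ha];
      eapply cv_nat_ext; try apply Ha; intros m; cbn; ring.
Qed.

Lemma nonzero_backward (f g : Z -> C) :
  (forall n, f n = g n * f (n + 1)%Z) -> (forall n, g n <> 0) ->
  (exists N, forall n, (N <= n)%Z -> f n <> 0) -> forall n, f n <> 0.
Proof.
  intros Hf Hg [N HN] n.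
  assert (H : forall j : nat, f (N - Z.of_nat j)%Z <> 0).
  { induction j as [|j IH].
    - apply HN. lia.
    - rewrite Hf. replace (N - Z.of_nat (S j) + 1)%Z with (N - Z.of_nat j)%Z by lia.
      apply Cmult_neq_0; auto. }
  destruct (Z_le_gt_dec N n); [apply HN; auto|].
  replace n with (N - Z.of_nat (Z.to_nat (N - n)))%Z by lia. apply H.
Qed.

Lemma coef_eventually_nonzero (St : Z -> Seq2 -> Seq2) (b : Seq2) (G : Z -> R) (i : bool) :
  contracting St b G -> coord i b 0%nat = 1 ->
  exists N, forall n, (N <= n)%Z -> coord i (coef_limit St b n 0) <> 0.
Proof.
  intros HC Hb. destruct (coef_near_base St b G HC (1 / 2)) as [N HN]; [lra|].
  exists N. intros n Hn Hz. specialize (HN n 0%nat i Hn). rewrite Hz, Hb in HN.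
  replace (0 - 1) with (- (1)) in HN by ring. rewrite Cmod_opp, Cmod_1 in HN. lra.
Qed.

Lemma psi_coef_nonzero (h1 : forall n, 1 - q n * r n <> 0) (n : Z) : comp2 (psi_coef q r n 0) <> 0.
Proof.
  apply (nonzero_backward (fun n => comp2 (psi_coef q r n 0)) (fun n => 1 - q n * r n)); auto.
  - intros m. rewrite psi_coef_0 at 1. reflexivity.
  - apply (coef_eventually_nonzero _ _ _ false HCpsi). reflexivity.
Qed.

Lemma bar_coef_nonzero (h2 : forall n, 1 + q n * r (n + 1)%Z <> 0) (n : Z) :
  comp1 (bar_coef q r n 0) <> 0.
Proof.
  apply (nonzero_backward (fun n => comp1 (bar_coef q r n 0)) (fun n => 1 + q n * r (n + 1)%Z)).
  all: auto.
  - intros m.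
    assert (E : comp2 (bar_coef q r (m + 1) 0) = r (m + 1)%Z * comp1 (bar_coef q r (m + 1) 0))
      by (rewrite (bar_coef_0 (m + 1)); reflexivity).
    transitivity (comp1 (bar_coef q r (m + 1) 0) + q m * comp2 (bar_coef q r (m + 1) 0)).
    + rewrite bar_coef_0 at 1. reflexivity.
    + rewrite E. ring.
  - apply (coef_eventually_nonzero _ _ _ true HCbar). reflexivity.
Qed.

Lemma psi_coef_sums (n : Z) (i : bool) :
  cv_nat (csum (fun k => coord i (psi_coef q r n k))) (coord i (RtoC 0, RtoC 1)).
Proof. rewrite <- (psi_sol_at_1 n). apply (coef_series 1 _ _ _ HCpsi). Qed.

Lemma bar_coef_sums (n : Z) (i : bool) :
  cv_nat (csum (fun k => coord i (bar_coef q r n k))) (coord i (RtoC 1, comp2 (bar_sol q r n 0))).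
Proof.
  replace (RtoC 1, comp2 (bar_sol q r n 0)) with (bar_sol q r n 0).
  - apply (coef_series (-1) _ _ _ HCbar).
  - apply injective_projections; [apply bar_sol_at_1|reflexivity].
Qed.

Variables psi psib : Z -> C -> vec2.
Hypotheses (hpsi : jost_psi q r psi) (hpsib : jost_psibar q r psib).

Lemma psi_identified (n : Z) (t : R) : psi n (eit t) = psi_sol q r n t.
Proof.
  destruct (hpsi (eit t) (Cmod_eit t)) as (Hsol & H1 & H2).
  rewrite (solution_decomp q r t _ _ _ (RtoC 0, RtoC 1) (psi_sol_solves t) (bar_sol_solves t) Hsol
             (psi_sol_renorm t) (bar_sol_renorm t)).
  - cbn. apply injective_projections; cbn; ring.
  - split; cbn.
    + apply (cv_unimodular_0 _ (fun n => fmode t n)); auto. intros; apply Cmod_fmode.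
    + eapply cv_ext; [|apply H2]. intros m; cbv beta; rewrite zpow_eit; reflexivity.
Qed.

Lemma psib_identified (n : Z) (t : R) : psib n (eit t) = bar_sol q r n t.
Proof.
  destruct (hpsib (eit t) (Cmod_eit t)) as (Hsol & H1 & H2).
  rewrite (solution_decomp q r t _ _ _ (RtoC 1, RtoC 0) (psi_sol_solves t) (bar_sol_solves t) Hsol
             (psi_sol_renorm t) (bar_sol_renorm t)).
  - cbn. apply injective_projections; cbn; ring.
  - split; cbn.
    + eapply cv_ext; [|apply H1]. intros m; cbv beta; rewrite zpow_eit; reflexivity.
    + apply (cv_unimodular_0 _ (fun n => fmode t (- n))); auto. intros; apply Cmod_fmode.
Qed.

Lemma Kc_coef (n : Z) (k : nat) : Kc psi n (n + Z.of_nat k) = psi_coef q r n k.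
Proof.
  assert (Hk : forall k', (1 * (n + Z.of_nat k') + (- (n + Z.of_nat k) - 1) + 1)%Z = 0%Z <-> k' = k)
    by (split; intros; [apply Nat2Z.inj; lia|subst; lia]).
  apply injective_projections;
    [exact (fourier_coef_limit 1 _ _ _ HCpsi psi n _ k true (psi_identified n) Hk)
    |exact (fourier_coef_limit 1 _ _ _ HCpsi psi n _ k false (psi_identified n) Hk)].
Qed.

Lemma Kbc_coef (n : Z) (k : nat) : Kbc psib n (n + Z.of_nat k) = bar_coef q r n k.
Proof.
  assert (Hk : forall k', (-1 * (n + Z.of_nat k') + (n + Z.of_nat k - 1) + 1)%Z = 0%Z <-> k' = k)
    by (split; intros; [apply Nat2Z.inj; lia|subst; lia]).
  apply injective_projections;
    [exact (fourier_coef_limit (-1) _ _ _ HCbar psib n _ k true (psib_identified n) Hk)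
    |exact (fourier_coef_limit (-1) _ _ _ HCbar psib n _ k false (psib_identified n) Hk)].
Qed.

Lemma bar_coef_0_diag (n : Z) :
  bar_coef q r n 0 = (comp1 (bar_coef q r n 0), r n * comp1 (bar_coef q r n 0)).
Proof. rewrite (bar_coef_0 n). reflexivity. Qed.

Lemma Mc_series (n : Z) (i : bool) :
  zsum_from n (fun l => coord i (Mc psi psib n l))
    (coord i (inv2_apply (bar_coef q r n 0) (psi_coef q r n 0) (RtoC 0, RtoC 1))).
Proof.
  unfold zsum_from, Mc.
  replace (Kc psi n n) with (psi_coef q r n 0) by (rewrite <- Kc_coef; f_equal; lia).
  replace (Kbc psib n n) with (bar_coef q r n 0) by (rewrite <- Kbc_coef; f_equal; lia).
  eapply is_series_ext; [|apply (is_series_inv2_apply _ _ _ (psi_coef q r n)), psi_coef_sums].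
  intros k. cbv beta. rewrite Kc_coef. reflexivity.
Qed.

Lemma Mbar_series (n : Z) (i : bool) :
  zsum_from n (fun l => coord i (Mbar psi psib n l))
    (coord i (inv2_apply (bar_coef q r n 0) (psi_coef q r n 0) (RtoC 1, comp2 (bar_sol q r n 0)))).
Proof.
  unfold zsum_from, Mbar.
  replace (Kc psi n n) with (psi_coef q r n 0) by (rewrite <- Kc_coef; f_equal; lia).
  replace (Kbc psib n n) with (bar_coef q r n 0) by (rewrite <- Kbc_coef; f_equal; lia).
  eapply is_series_ext; [|apply (is_series_inv2_apply _ _ _ (bar_coef q r n)), bar_coef_sums].
  intros k. cbv beta. rewrite Kbc_coef. reflexivity.
Qed.

Hypotheses (h1 : forall n, 1 - q n * r n <> 0) (h2 : forall n, 1 + q n * r (n + 1)%Z <> 0).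

Lemma q_reconstruction (n : Z) :
  exists S1 S2 S3 S4 : C,
    zsum_from n (fun l => comp1 (Mc psi psib n l)) S1 /\
    zsum_from n (fun k => comp2 (Mc psi psib n k)) S2 /\
    zsum_from n (fun l => comp1 (Mbar psi psib n l)) S3 /\
    zsum_from n (fun k => comp2 (Mbar psi psib n k)) S4 /\
    q n = S1 * S2 / (S3 * S2 - S1 * S4).
Proof.
  set (M := inv2_apply (bar_coef q r n 0) (psi_coef q r n 0)).
  exists (comp1 (M (RtoC 0, RtoC 1))), (comp2 (M (RtoC 0, RtoC 1))),
    (comp1 (M (RtoC 1, comp2 (bar_sol q r n 0)))), (comp2 (M (RtoC 1, comp2 (bar_sol q r n 0)))).
  refine (conj (Mc_series n true) (conj (Mc_series n false)
           (conj (Mbar_series n true) (conj (Mbar_series n false) _)))).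
  unfold M. rewrite (bar_coef_0_diag n), (psi_coef_0 n).
  apply inv2_apply_q_identity; [apply bar_coef_nonzero|apply psi_coef_nonzero]; auto.
Qed.

Lemma r_reconstruction (n : Z) :
  exists T1 T2 U1 U2 : C,
    zsum_from (n - 1)%Z (fun l => comp2 (Mbar psi psib (n - 1)%Z l)) T1 /\
    zsum_from (n - 1)%Z (fun l => comp2 (Mc psi psib (n - 1)%Z l)) T2 /\
    zsum_from n (fun l => comp2 (Mbar psi psib n l)) U1 /\
    zsum_from n (fun l => comp2 (Mc psi psib n l)) U2 /\
    r n = T1 / T2 - U1 / U2.
Proof.
  set (M := fun m => inv2_apply (bar_coef q r m 0) (psi_coef q r m 0)).
  set (D := fun m => comp2 (bar_sol q r m 0)).
  exists (comp2 (M (n - 1)%Z (RtoC 1, D (n - 1)%Z))), (comp2 (M (n - 1)%Z (RtoC 0, RtoC 1))),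
    (comp2 (M n (RtoC 1, D n))), (comp2 (M n (RtoC 0, RtoC 1))).
  refine (conj (Mbar_series (n - 1) false) (conj (Mc_series (n - 1) false)
           (conj (Mbar_series n false) (conj (Mc_series n false) _)))).
  unfold M. rewrite (bar_coef_0_diag (n - 1)), (psi_coef_0 (n - 1)), (bar_coef_0_diag n),
      (psi_coef_0 n).
  rewrite !inv2_apply_ratio by (apply bar_coef_nonzero || apply psi_coef_nonzero; auto).
  unfold D. rewrite (proj2 (bar_sol_at_1 (n - 1))). replace (n - 1 + 1)%Z with n by lia. ring.
Qed.

End JostSolutions.

Theorem theorem6p3 (q r : Z -> C) (psi psib : Z -> C -> vec2)
  (hq : rapid_decay q) (hr : rapid_decay r)
  (h1 : forall n : Z, 1 - q n * r n <> 0)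
  (h2 : forall n : Z, 1 + q n * r (n + 1)%Z <> 0)
  (hpsi : jost_psi q r psi) (hpsib : jost_psibar q r psib) :
  forall n : Z,
    (exists S1 S2 S3 S4 : C,
        zsum_from n (fun l => comp1 (Mc psi psib n l)) S1 /\
        zsum_from n (fun k => comp2 (Mc psi psib n k)) S2 /\
        zsum_from n (fun l => comp1 (Mbar psi psib n l)) S3 /\
        zsum_from n (fun k => comp2 (Mbar psi psib n k)) S4 /\
        q n = S1 * S2 / (S3 * S2 - S1 * S4)) /\
    (exists T1 T2 U1 U2 : C,
        zsum_from (n - 1)%Z (fun l => comp2 (Mbar psi psib (n - 1)%Z l)) T1 /\
        zsum_from (n - 1)%Z (fun l => comp2 (Mc psi psib (n - 1)%Z l)) T2 /\
        zsum_from n (fun l => comp2 (Mbar psi psib n l)) U1 /\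
        zsum_from n (fun l => comp2 (Mc psi psib n l)) U2 /\
        r n = T1 / T2 - U1 / U2).
Proof.
  intros n. split.
  - apply (q_reconstruction q r hq hr psi psib hpsi hpsib h1 h2).
  - apply (r_reconstruction q r hq hr psi psib hpsi hpsib h1 h2).
Qed.
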